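(* Let $\alpha_i,\beta_i,\gamma_i$ ($i=1,2,3$) be real numbers such that $$\operatorname{Rank}\begin{pmatrix}\alpha_1&\beta_1&\gamma_1&0&0&0\\ \alpha_2&\beta_2&\gamma_2&0&0&0\\ 0&0&0&\alpha_3&\beta_3&\gamma_3\end{pmatrix}=3,$$ and let $B_1[u]=\alpha_1u(0)+\beta_1u'(0)+\gamma_1u''(0)$, $B_2[u]=\alpha_2u(0)+\beta_2u'(0)+\gamma_2u''(0)$, $B_3[u]=\alpha_3u(1)+\beta_3u'(1)+\gamma_3u''(1)$. Assume the problem $u'''=\varphi$ on $(0,1)$, $B_1[u]=B_2[u]=B_3[u]=0$ has a Green function $G(t,s)$, and set $G_1=\partial G/\partial t$, $G_2=\partial^2 G/\partial t^2$, $$M_0=\max_{0\le t\le1}\int_0^1|G(t,s)|ds,\quad M_1=\max_{0\le t\le1}\int_0^1|G_1(t,s)|ds,\quad M_2=\max_{0\le t\le1}\int_0^1|G_2(t,s)|ds.$$ For $M>0$ let $\mathcal{D}_M=\{(t,x,y,z): 0\le t\le1,\ |x|\le M_0M,\ |y|\le M_1M,\ |z|\le M_2M\}$. Suppose there exists $M>0$ such that the function $f(t,x,y,z)$ is continuous in $\mathcal{D}_M$ and $|f(t,x,y,z)|\le M$ for all $(t,x,y,z)\in\mathcal{D}_M$. Then the problem $$u'''(t)=f(t,u(t),u'(t),u''(t)),\ 0<t<1,\qquad B_1[u]=B_2[u]=B_3[u]=0$$ has a solution $u$ satisfying $|u(t)|\le M_0M$, $|u'(t)|\le M_1M$, $|u''(t)|\le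 M_2M$ for all $0\le t\le 1$.
   Context: The Green function $G(t,s)$ of the linear problem $u'''=\varphi$, $B_1[u]=B_2[u]=B_3[u]=0$ is the function on $[0,1]^2$ such that for every $\varphi\in C[0,1]$ the unique solution of this linear problem is $u(t)=\int_0^1G(t,s)\varphi(s)\,ds$; then $u'(t)=\int_0^1G_1(t,s)\varphi(s)ds$, $u''(t)=\int_0^1G_2(t,s)\varphi(s)ds$, where $G_1$ is continuous on $[0,1]^2$ and $G_2$ is continuous on $[0,1]^2$ except on the line $t=s$. *)

From Stdlib Require Import Reals.
From Coquelicot Require Import Coquelicot.
Open Scope R_scope.

(* Rank of the 3x6 matrix
     ( a1 b1 c1 0  0  0  )
     ( a2 b2 c2 0  0  0  )
     ( 0  0  0  a3 b3 c3 )
   equals 3, i.e. its three rows are linearly independent: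
   x*row1 + y*row2 + z*row3 = 0 (all six entries) forces x = y = z = 0. *)
Definition rank3_bc (a1 b1 c1 a2 b2 c2 a3 b3 c3 : R) : Prop :=
  forall x y z : R,
    x * a1 + y * a2 + z * 0 = 0 ->
    x * b1 + y * b2 + z * 0 = 0 ->
    x * c1 + y * c2 + z * 0 = 0 ->
    x * 0 + y * 0 + z * a3 = 0 ->
    x * 0 + y * 0 + z * b3 = 0 ->
    x * 0 + y * 0 + z * c3 = 0 ->
    x = 0 /\ y = 0 /\ z = 0.

Definition I01 (t : R) : Prop := 0 <= t <= 1.

Definition cont_on01 (g : R -> R) : Prop :=
  forall t, I01 t -> filterlim g (within I01 (locally t)) (locally (g t)).

Definition Bform (a b c x y z : R) : R := a * x + b * y + c * z.

Definition is_bvp_solution (a1 b1 c1 a2 b2 c2 a3 b3 c3 : R)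
  (rhs : R -> R -> R -> R -> R) (u u1 u2 : R -> R) : Prop :=
  cont_on01 u /\ cont_on01 u1 /\ cont_on01 u2 /\
  (forall t, 0 < t < 1 ->
     is_derive u t (u1 t) /\ is_derive u1 t (u2 t) /\
     is_derive u2 t (rhs t (u t) (u1 t) (u2 t))) /\
  Bform a1 b1 c1 (u 0) (u1 0) (u2 0) = 0 /\
  Bform a2 b2 c2 (u 0) (u1 0) (u2 0) = 0 /\
  Bform a3 b3 c3 (u 1) (u1 1) (u2 1) = 0.

Definition Sq01 (p : R * R) : Prop := I01 (fst p) /\ I01 (snd p).

Definition is_green_function (a1 b1 c1 a2 b2 c2 a3 b3 c3 : R)
  (G G1 G2 : R -> R -> R) : Prop :=
  (forall p, Sq01 p ->
     filterlim (fun q : R * R => G (fst q) (snd q)) (within Sq01 (locally p))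
       (locally (G (fst p) (snd p)))) /\
  (forall p, Sq01 p ->
     filterlim (fun q : R * R => G1 (fst q) (snd q)) (within Sq01 (locally p))
       (locally (G1 (fst p) (snd p)))) /\
  (forall p, Sq01 p -> fst p <> snd p ->
     filterlim (fun q : R * R => G2 (fst q) (snd q))
       (within (fun q => Sq01 q /\ fst q <> snd q) (locally p))
       (locally (G2 (fst p) (snd p)))) /\
  (forall t s, 0 < t < 1 -> I01 s -> is_derive (fun r => G r s) t (G1 t s)) /\
  (forall t s, 0 < t < 1 -> I01 s -> t <> s ->
     is_derive (fun r => G1 r s) t (G2 t s)) /\
  (forall phi : R -> R, cont_on01 phi ->
     is_bvp_solution a1 b1 c1 a2 b2 c2 a3 b3 c3 (fun t _ _ _ => phi t)
       (fun t => RInt (fun s => G t s * phi s) 0 1)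
       (fun t => RInt (fun s => G1 t s * phi s) 0 1)
       (fun t => RInt (fun s => G2 t s * phi s) 0 1) /\
     (forall v v1 v2,
        is_bvp_solution a1 b1 c1 a2 b2 c2 a3 b3 c3 (fun t _ _ _ => phi t) v v1 v2 ->
        forall t, I01 t -> v t = RInt (fun s => G t s * phi s) 0 1)).

Definition is_max01 (g : R -> R) (m : R) : Prop :=
  (forall t, I01 t -> g t <= m) /\ (exists t, I01 t /\ g t = m).

Definition DM (M0 M1 M2 M : R) (p : R * R * R * R) : Prop :=
  let '(t, x, y, z) := p in
  0 <= t <= 1 /\ Rabs x <= M0 * M /\ Rabs y <= M1 * M /\ Rabs z <= M2 * M.

Definition cont_on4 (f : R -> R -> R -> R -> R) (D : R * R * R * R -> Prop) : Prop :=
  forall p, D p ->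
    filterlim (fun q : R * R * R * R => let '(t, x, y, z) := q in f t x y z)
      (within D (locally p))
      (locally (let '(t, x, y, z) := p in f t x y z)).

From Stdlib Require Import Reals Lra Lia ZArith List IndefiniteDescription.
From Coquelicot Require Import Coquelicot.
From mathcomp Require all_boot all_order all_algebra all_classical all_reals topology normedtype.
From mathcomp Require Rstruct Rstruct_topology.
Import ListNotations.
Open Scope R_scope.

(* Compose f with the projection onto D_M: the result F is continuous on R^4 and bounded
   by M.  The problem u''' = F(t, u, u', u''), B1[u] = B2[u] = B3[u] = 0 is solved by
   shooting.  The conditions at 0 say that (u(0), u'(0), u''(0)) is a multiple lam (p, q, r) of
   the cross product (p, q, r) of the first two rows of the boundary matrix.  A Taylor scheme with
   n steps and initial data lam (p, q, r) satisfies B3 at 1 up to an error bounded independently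
   of lam, compared with lam B3[p + q t + r t^2 / 2]; this slope is nonzero by uniqueness for the
   linear problem, so the intermediate value theorem gives a parameter lam_n for which the scheme
   satisfies B3 exactly.  The discrete solutions are bounded and equi-Lipschitz; by Tychonoff's
   theorem they have a pointwise cluster point, and it is a solution.  It solves the linear
   problem with phi = F(t, u, u', u''), |phi| <= M, so the Green representation gives
   |u^(j)| <= M_j M: the projection is inactive along u, and u solves the original problem.
   The representation of u'' needs s |-> G2(t, s) to be integrable, which holds because G2 is
   constant in t on each side of the diagonal, with a jump 1 across it. *)

Definition cluster_point {T : Type} (u : nat -> T -> R) (g : T -> R) : Prop :=
  forall (l : list T) (eps : R) (N0 : nat), 0 < eps ->
  exists N, (N0 <= N)%nat /\ forall x, In x l -> Rabs (u N x - g x) < eps.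

Module PointwiseCompactness.
From mathcomp Require Import all_boot all_order all_algebra all_classical all_reals topology normedtype.
From mathcomp Require Import Rstruct Rstruct_topology.
Local Open Scope classical_set_scope.

Lemma cluster_point_exists (T : Type) (u : nat -> T -> R) (B : R) :
  (forall n x, Rle (Rabs (u n x)) B) -> exists g, cluster_point u g.
Proof.
move=> uB.
have := @tychonoff {classic T} (fun=> R) (fun=> `[(- B)%R, B]) (fun=> @segment_compact _ _ _).
set K := [set f | _] => cK.
have FK : (u @ \oo) K.
  exists 0%N => // n _ i /=.
  rewrite in_itv /=; apply/andP; split; apply/RleP;
  move: (uB n i); rewrite /Rabs; case: Rcase_abs; change (- B)%R with (Ropp B); Lra.lra.
have [g [_ cg]] := cK _ _ FK.
exists g => l eps N0 eps0.
have FX : (u @ \oo) (u @` [set n | (N0 <= n)%N]) by exists N0 => // n N0n; exists n.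
have NY : nbhs g [set f : {classic T} -> R | forall x, In x l -> Rlt (Rabs (Rminus (f x) (g x))) eps].
  elim: l => [|a l IH]; first by apply: filterE => f x [].
  have Ha : nbhs g [set f : {classic T} -> R | Rlt (Rabs (Rminus (f a) (g a))) eps].
    have /= := @proj_continuous {classic T} (fun=> R) a g (ball (g a) eps).
    have Hb : nbhs (g a) (ball (g a) eps) by apply: nbhsx_ballx; apply/RltP.
    move=> /(_ Hb) Hp.
    have Hp' : nbhs g (proj a @^-1` ball (g a) eps) := Hp.
    apply: (filterS _ Hp') => f /=.
    by rewrite /ball /= => /RltP; rewrite -Rabs_Ropp Ropp_minus_distr.
  have Hal := @filterI _ _ (@nbhs_pfilter _ g) _ _ Ha IH.
  by apply: (filterS _ Hal) => f [fa fl] x /= [<-|xl]; [exact: fa | exact: fl].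
have [f [[N N0N <-] Hf]] := cg _ _ FX NY.
by exists N; split; [apply/ssrnat.leP | exact: Hf].
Qed.

End PointwiseCompactness.

Lemma Rabs_triang3 a b c : Rabs (a + b + c) <= Rabs a + Rabs b + Rabs c.
Proof. pose proof (Rabs_triang (a + b) c); pose proof (Rabs_triang a b); lra. Qed.

Lemma Rabs_triang4 a b c d : Rabs (a + b + c + d) <= Rabs a + Rabs b + Rabs c + Rabs d.
Proof. pose proof (Rabs_triang (a + b + c) d); pose proof (Rabs_triang3 a b c); lra. Qed.

Lemma Rabs_mult_nonneg h x : 0 <= h -> Rabs (h * x) = h * Rabs x.
Proof. intros; rewrite Rabs_mult, Rabs_pos_eq; auto. Qed.

Lemma le_of_le_add_eps x y K : (forall eps, 0 < eps <= 1 -> x <= y + eps * K) -> x <= y.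
Proof.
  intros H. destruct (Rle_lt_dec x y) as [|Hlt]; auto.
  assert (HK : 0 < K) by (specialize (H 1 ltac:(lra)); lra).
  set (eps := Rmin 1 ((x - y) / (2 * K))).
  assert (He : 0 < eps) by (apply Rmin_glb_lt; [lra | apply Rdiv_lt_0_compat; lra]).
  assert (HeK : eps * K <= (x - y) / 2).
  { apply (Rle_trans _ ((x - y) / (2 * K) * K)).
    - apply Rmult_le_compat_r; [lra | apply Rmin_r].
    - right; field; lra. }
  specialize (H eps (conj He (Rmin_l _ _))). lra.
Qed.

Lemma eq_of_dist_le_eps a b K : (forall eps, 0 < eps <= 1 -> Rabs (a - b) <= eps * K) -> a = b.
Proof.
  intros H. assert (Habs : Rabs (a - b) <= 0).
  { apply (le_of_le_add_eps _ _ K); intros eps He. rewrite Rplus_0_l; auto. }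
  pose proof (Rabs_pos (a - b)). apply Rminus_diag_uniq, Rabs_eq_0. lra.
Qed.

Lemma Rmult_le_of_le_div x a b : 0 < b -> x <= a / b -> x * b <= a.
Proof.
  intros Hb H. apply (Rmult_le_compat_r b) in H; [| lra].
  unfold Rdiv in H. rewrite Rmult_assoc, Rinv_l, Rmult_1_r in H by lra. exact H.
Qed.

Lemma inv_INR_bounds n : (0 < n)%nat -> 0 < / INR n <= 1.
Proof.
  intros Hn. assert (H1 : 1 <= INR n) by (apply (le_INR 1); lia).
  split; [apply Rinv_0_lt_compat; lra |].
  rewrite <- Rinv_1. apply Rinv_le_contravar; lra.
Qed.

Lemma inv_INR_S_small rho : 0 < rho -> exists N0, forall N, (N0 <= N)%nat -> / INR (S N) <= rho.
Proof.
  intros Hr. destruct (archimed (/ rho)) as [H1 _].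
  assert (Hu : (0 <= up (/ rho))%Z).
  { apply le_IZR. pose proof (Rinv_0_lt_compat rho Hr). simpl; lra. }
  exists (Z.to_nat (up (/ rho))). intros N HN.
  assert (HN' : IZR (up (/ rho)) <= INR (S N)).
  { rewrite <- (Z2Nat.id (up (/ rho))) by auto. rewrite <- INR_IZR_INZ. apply le_INR. lia. }
  rewrite <- (Rinv_inv rho). apply Rinv_le_contravar; [apply Rinv_0_lt_compat |]; lra.
Qed.

Definition continuous_within (D : R -> Prop) (g : R -> R) (x : R) : Prop :=
  filterlim g (within D (locally x)) (locally (g x)).

Lemma continuous_within_mult D f g x : continuous_within D f x -> continuous_within D g x ->
  continuous_within D (fun y => f y * g y) x.
Proof. intros Hf Hg. apply (filterlim_comp_2 f g Rmult Hf Hg). apply (filterlim_mult (K := R_AbsRing)). Qed.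

Lemma continuous_within_plus D f g x : continuous_within D f x -> continuous_within D g x ->
  continuous_within D (fun y => f y + g y) x.
Proof. intros Hf Hg. apply (filterlim_comp_2 f g Rplus Hf Hg). apply (filterlim_plus (V := R_NormedModule)). Qed.

Lemma continuous_within_abs D f x : continuous_within D f x -> continuous_within D (fun y => Rabs (f y)) x.
Proof. intros Hf. apply (filterlim_comp _ _ _ f Rabs _ _ _ Hf (continuous_Rabs (f x))). Qed.

Lemma continuous_within_const D c x : continuous_within D (fun _ => c) x.
Proof. apply filterlim_const. Qed.

Lemma continuous_within_ext_near D f g x : D x -> locally x (fun y => D y -> f y = g y) ->
  continuous_within D f x -> continuous_within D g x.
Proof.
  intros Hx Heq Hf. unfold continuous_within.
  rewrite <- (locally_singleton _ _ Heq Hx). apply (filterlim_ext_loc f); auto.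
Qed.

Lemma continuous_within_subset (D E : R -> Prop) g x : (forall y, E y -> D y) ->
  continuous_within D g x -> continuous_within E g x.
Proof.
  intros HED Hg P HP. specialize (Hg P HP). unfold filtermap, within in *.
  apply (filter_imp _ _ (fun y H HE => H (HED y HE)) Hg).
Qed.

Lemma locally_interior a b x : a < x < b -> locally x (fun y => a < y < b).
Proof.
  intros Hx. exists (mkposreal (Rmin (x - a) (b - x)) ltac:(apply Rmin_glb_lt; lra)). intros y Hy.
  change (Rabs (y - x) < Rmin (x - a) (b - x)) in Hy. apply Rabs_def2 in Hy.
  pose proof (Rmin_l (x - a) (b - x)). pose proof (Rmin_r (x - a) (b - x)). lra.
Qed.

Lemma continuous_of_continuous_within D g x : locally x D -> continuous_within D g x -> continuous g x.
Proof.
  intros HD Hg P HP. specialize (Hg P HP). unfold filtermap, within in *.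
  apply (filter_imp (fun y => D y /\ (D y -> P (g y)))); [intros y [Hy H]; exact (H Hy) |].
  apply filter_and; auto.
Qed.

Definition clamp (a b x : R) := Rmax a (Rmin b x).

Lemma clamp_in a b x : a <= b -> a <= clamp a b x <= b.
Proof. intros H. unfold clamp. split; [apply Rmax_l | apply Rmax_lub; auto; apply Rmin_l]. Qed.

Lemma clamp_id a b x : a <= x <= b -> clamp a b x = x.
Proof. intros H. unfold clamp. rewrite Rmin_right, Rmax_right; lra. Qed.

Lemma clamp_lipschitz a b x y : a <= b -> Rabs (clamp a b x - clamp a b y) <= Rabs (x - y).
Proof.
  intros H. unfold clamp, Rmax, Rmin.
  repeat destruct Rle_dec; apply Rabs_le_between; split;
    (destruct (Rle_dec 0 (x - y)); [rewrite (Rabs_pos_eq (x - y)) by lra | rewrite (Rabs_left (x - y)) by lra]);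
    lra.
Qed.

Section Interval.

Variables a b : R.
Let D := fun y => a <= y <= b.

Lemma continuous_within_interval (g : R -> R) x : continuous_within D g x <->
  forall eps, 0 < eps -> exists del, 0 < del /\
    forall y, a <= y <= b -> Rabs (y - x) < del -> Rabs (g y - g x) < eps.
Proof.
  split.
  - intros H eps He. apply filterlim_locally with (eps := mkposreal eps He) in H.
    destruct H as [[d Hd] H]. exists d. split; auto. intros y Hy Hyx. apply (H y); auto.
  - intros H. apply filterlim_locally. intros [eps He].
    destruct (H eps He) as [d [Hd H1]]. exists (mkposreal d Hd). intros y Hyx Hy. apply H1; auto.
Qed.

Lemma ex_RInt_of_continuous_on (g : R -> R) : a <= b -> continuous_on D g -> ex_RInt g a b.
Proof.
  intros Hab H.
  apply (ex_RInt_ext (fun x => g (clamp a b x))).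
  { intros x Hx. rewrite Rmin_left, Rmax_right in Hx by lra. rewrite clamp_id; lra. }
  apply (ex_RInt_continuous (V := R_CompleteNormedModule)). intros z _.
  apply filterlim_locally. intros [eps He].
  destruct (proj1 (continuous_within_interval g (clamp a b z)) (H _ (clamp_in a b z Hab)) eps He)
    as [d [Hd H1]].
  exists (mkposreal d Hd). intros y Hy. apply H1; [apply clamp_in; auto |].
  eapply Rle_lt_trans; [apply clamp_lipschitz; auto | apply Hy].
Qed.

Lemma continuous_within_interval_eq (f g : R -> R) x : a < b -> a <= x <= b ->
  continuous_within D f x -> continuous_within D g x -> (forall y, a < y < b -> f y = g y) -> f x = g x.
Proof.
  intros Hab Hx Hf Hg Heq.
  apply (eq_of_dist_le_eps _ _ 2). intros eps He.
  destruct (proj1 (continuous_within_interval f x) Hf eps ltac:(lra)) as [d1 [Hd1 H1]].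
  destruct (proj1 (continuous_within_interval g x) Hg eps ltac:(lra)) as [d2 [Hd2 H2]].
  set (d := Rmin (Rmin d1 d2) ((b - a) / 2)).
  assert (Hd : 0 < d) by (apply Rmin_glb_lt; [apply Rmin_glb_lt |]; lra).
  pose proof (Rmin_l (Rmin d1 d2) ((b - a) / 2)). pose proof (Rmin_r (Rmin d1 d2) ((b - a) / 2)).
  pose proof (Rmin_l d1 d2). pose proof (Rmin_r d1 d2). fold d in H, H0.
  set (y := if Rle_dec x ((a + b) / 2) then x + d / 2 else x - d / 2).
  assert (Hy : a < y < b /\ Rabs (y - x) < d).
  { unfold y. destruct Rle_dec; split; try lra; apply Rabs_def1; lra. }
  destruct Hy as [Hy1 Hy2].
  specialize (H1 y ltac:(lra) ltac:(lra)). specialize (H2 y ltac:(lra) ltac:(lra)).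
  rewrite (Heq y Hy1) in H1.
  replace (f x - g x) with (- (g y - f x) + (g y - g x)) by ring.
  eapply Rle_trans; [apply Rabs_triang |]. rewrite Rabs_Ropp. lra.
Qed.

Lemma RInt_abs_bound (k phi : R -> R) m : a <= b -> ex_RInt (fun s => k s * phi s) a b ->
  ex_RInt (fun s => Rabs (k s * phi s)) a b -> ex_RInt (fun s => Rabs (k s)) a b ->
  (forall s, a <= s <= b -> Rabs (phi s) <= m) ->
  Rabs (RInt (fun s => k s * phi s) a b) <= m * RInt (fun s => Rabs (k s)) a b.
Proof.
  intros Hab E1 E2 E3 Hb.
  eapply Rle_trans; [apply abs_RInt_le; auto |].
  assert (Es : RInt (fun s => m * Rabs (k s)) a b = m * RInt (fun s => Rabs (k s)) a b)
    by exact (RInt_scal (V := R_CompleteNormedModule) _ a b m E3).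
  rewrite <- Es. apply RInt_le; auto.
  - apply (ex_RInt_scal (V := R_NormedModule)); auto.
  - intros x Hx. rewrite Rabs_mult, (Rmult_comm m). apply Rmult_le_compat_l; [apply Rabs_pos | apply Hb; lra].
Qed.

Lemma RInt_near_const (k phi : R -> R) c eps : a <= b ->
  continuous_on D (fun s => k s * phi s) -> continuous_on D phi ->
  (forall s, a <= s <= b -> Rabs (k s * phi s - c * phi s) <= eps * phi s) ->
  Rabs (RInt (fun s => k s * phi s) a b - c * RInt phi a b) <= eps * RInt phi a b.
Proof.
  intros Hab Hk Hp Hb.
  assert (Hd : continuous_on D (fun s => k s * phi s - c * phi s)).
  { apply (continuous_on_ext D (fun s => k s * phi s + (- c) * phi s)); [intros; rewrite Ropp_mult_distr_l_reverse; reflexivity |].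
    intros x Hx. apply (continuous_within_plus D (fun s => k s * phi s) (fun s => - c * phi s)).
    - exact (Hk x Hx).
    - apply (continuous_within_mult D (fun _ => - c) phi); [apply continuous_within_const | exact (Hp x Hx)]. }
  assert (E1 := ex_RInt_of_continuous_on _ Hab Hk). assert (E2 := ex_RInt_of_continuous_on _ Hab Hp).
  assert (E3 : ex_RInt (fun s => c * phi s) a b) by (apply (ex_RInt_scal (V := R_NormedModule)); auto).
  assert (E4 := ex_RInt_of_continuous_on _ Hab Hd).
  assert (E5 : ex_RInt (fun s => Rabs (k s * phi s - c * phi s)) a b).
  { apply ex_RInt_of_continuous_on; auto. intros x Hx. apply (continuous_within_abs D (fun s => k s * phi s - c * phi s)), Hd, Hx. }
  assert (Escal : forall m, RInt (fun s => m * phi s) a b = m * RInt phi a b)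
    by (intros m; exact (RInt_scal (V := R_CompleteNormedModule) phi a b m E2)).
  replace (RInt (fun s => k s * phi s) a b - c * RInt phi a b)
    with (RInt (fun s => k s * phi s - c * phi s) a b)
    by (rewrite (RInt_minus (V := R_CompleteNormedModule) (fun s => k s * phi s) (fun s => c * phi s)),
          Escal by auto; reflexivity).
  eapply Rle_trans; [apply abs_RInt_le; auto |].
  rewrite <- Escal. apply RInt_le; auto.
  - apply (ex_RInt_scal (V := R_NormedModule)); auto.
  - intros x Hx. apply Hb; lra.
Qed.

End Interval.

Lemma RInt_ge_on_subinterval (phi : R -> R) a b c d m : a <= c -> c <= d -> d <= b ->
  continuous_on (fun s => a <= s <= b) phi -> (forall s, a <= s <= b -> 0 <= phi s) -> (forall s, c <= s <= d -> m <= phi s) ->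
  m * (d - c) <= RInt phi a b.
Proof.
  intros Hac Hcd Hdb Hp Hpos Hm.
  assert (Ex : forall x y, a <= x -> x <= y -> y <= b -> ex_RInt phi x y).
  { intros x y Hx Hxy Hy. apply (ex_RInt_of_continuous_on x y); auto.
    apply (continuous_on_subset (fun s => a <= s <= b)); auto. intros z Hz. lra. }
  rewrite <- (RInt_Chasles (V := R_CompleteNormedModule) phi a c b), <- (RInt_Chasles (V := R_CompleteNormedModule) phi c d b)
    by (apply Ex; lra).
  change (plus ?x (plus ?y ?z)) with (x + (y + z)).
  assert (0 <= RInt phi a c) by (apply RInt_ge_0; auto; [apply Ex; lra | intros; apply Hpos; lra]).
  assert (0 <= RInt phi d b) by (apply RInt_ge_0; auto; [apply Ex; lra | intros; apply Hpos; lra]).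
  assert (RInt (fun _ => m) c d <= RInt phi c d)
    by (apply RInt_le; [lra | apply ex_RInt_const | apply Ex; lra | intros; apply Hm; lra]).
  rewrite RInt_const in H1. change (scal (d - c) m) with ((d - c) * m) in H1. lra.
Qed.

Lemma continuous_on_of_lipschitz (D : R -> Prop) (g : R -> R) L :
  (forall s t, D s -> D t -> Rabs (g t - g s) <= L * Rabs (t - s)) -> continuous_on D g.
Proof.
  intros H x Hx. apply filterlim_locally. intros [eps He].
  assert (Hd : 0 < eps / (Rabs L + 1)) by (apply Rdiv_lt_0_compat; pose proof (Rabs_pos L); lra).
  exists (mkposreal _ Hd). intros y Hyx Hy. change (Rabs (g y - g x) < eps).
  change (Rabs (y - x) < eps / (Rabs L + 1)) in Hyx.
  eapply Rle_lt_trans; [apply H; auto |].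
  apply (Rle_lt_trans _ (Rabs L * Rabs (y - x))); [apply Rmult_le_compat_r; [apply Rabs_pos | apply Rle_abs] |].
  apply (Rle_lt_trans _ (Rabs L * (eps / (Rabs L + 1)))); [apply Rmult_le_compat_l; [apply Rabs_pos | lra] |].
  replace (Rabs L * (eps / (Rabs L + 1))) with (eps - eps / (Rabs L + 1)) by (field; pose proof (Rabs_pos L); lra).
  lra.
Qed.

Definition tent (c d s : R) : R := Rmax 0 (d - Rabs (s - c)).

Lemma tent_nonneg c d s : 0 <= tent c d s.
Proof. apply Rmax_l. Qed.

Lemma tent_zero c d s : d <= Rabs (s - c) -> tent c d s = 0.
Proof. intros H. unfold tent. apply Rmax_left. lra. Qed.

Lemma tent_support c d s : 0 < tent c d s -> Rabs (s - c) < d.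
Proof. intros H. destruct (Rlt_le_dec (Rabs (s - c)) d) as [|Hd]; auto. rewrite tent_zero in H; lra. Qed.

Lemma tent_continuous D c d : continuous_on D (tent c d).
Proof.
  apply (continuous_on_of_lipschitz _ _ 1). intros x y _ _. rewrite Rmult_1_l. unfold tent, Rmax.
  pose proof (Rabs_triang_inv (y - c) (x - c)). pose proof (Rabs_triang_inv (x - c) (y - c)).
  replace (y - c - (x - c)) with (y - x) in * by ring. replace (x - c - (y - c)) with (- (y - x)) in * by ring.
  rewrite Rabs_Ropp in *. pose proof (Rabs_pos (y - x)).
  repeat destruct Rle_dec; apply Rabs_le_between; split; lra.
Qed.

Lemma tent_integral_lower c d : 0 <= c <= 1 -> 0 < d <= 1 / 2 -> d / 2 * (d / 2) <= RInt (tent c d) 0 1.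
Proof.
  intros Hc Hd.
  assert (Hm : forall s, Rabs (s - c) <= d / 2 -> d / 2 <= tent c d s)
    by (intros s Hs; unfold tent; eapply Rle_trans; [| apply Rmax_r]; lra).
  destruct (Rle_dec (1 / 2) c).
  - replace (d / 2) with (c - (c - d / 2)) at 2 by ring.
    apply RInt_ge_on_subinterval; try lra; [apply tent_continuous | intros; apply tent_nonneg |].
    intros s Hs. apply Hm. rewrite Rabs_left1 by lra. lra.
  - replace (d / 2) with (c + d / 2 - c) at 2 by ring.
    apply RInt_ge_on_subinterval; try lra; [apply tent_continuous | intros; apply tent_nonneg |].
    intros s Hs. apply Hm. rewrite Rabs_pos_eq by lra. lra.
Qed.

Lemma ex_RInt_piecewise (h k1 k2 : R -> R) t : 0 <= t <= 1 ->
  continuous_on (fun s => 0 <= s <= t) k1 -> continuous_on (fun s => t <= s <= 1) k2 ->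
  (forall s, 0 < s < t -> h s = k1 s) -> (forall s, t < s < 1 -> h s = k2 s) -> ex_RInt h 0 1.
Proof.
  intros Ht H1 H2 E1 E2.
  apply (ex_RInt_Chasles h 0 t 1).
  - apply (ex_RInt_ext k1); [| apply ex_RInt_of_continuous_on; auto; lra].
    intros s Hs. rewrite Rmin_left, Rmax_right in Hs by lra. symmetry; auto.
  - apply (ex_RInt_ext k2); [| apply ex_RInt_of_continuous_on; auto; lra].
    intros s Hs. rewrite Rmin_left, Rmax_right in Hs by lra. symmetry; auto.
Qed.

Lemma joint_continuity_ed (H : R -> R -> R) (D : R * R -> Prop) t0 s0 :
  filterlim (fun q : R * R => H (fst q) (snd q)) (within D (locally (t0, s0))) (locally (H t0 s0)) ->
  forall eps, 0 < eps -> exists del, 0 < del /\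
    forall t s, D (t, s) -> Rabs (t - t0) < del -> Rabs (s - s0) < del -> Rabs (H t s - H t0 s0) < eps.
Proof.
  intros Hf eps He. apply filterlim_locally with (eps := mkposreal eps He) in Hf.
  destruct Hf as [[d Hd] Hf]. exists d. split; auto.
  intros t s HD H1 H2. apply (Hf (t, s)); auto. split; auto.
Qed.

Lemma derivative_unique_on01 (f g df dg : R -> R) : (forall t, I01 t -> f t = g t) ->
  cont_on01 df -> cont_on01 dg ->
  (forall t, 0 < t < 1 -> is_derive f t (df t)) -> (forall t, 0 < t < 1 -> is_derive g t (dg t)) ->
  forall t, I01 t -> df t = dg t.
Proof.
  intros Hfg Cf Cg Df Dg.
  assert (interior : forall t, 0 < t < 1 -> df t = dg t).
  { intros t Ht. specialize (Df t Ht). apply (is_derive_ext_loc f g) in Df.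
    - rewrite <- (is_derive_unique _ _ _ Df). apply is_derive_unique, Dg, Ht.
    - eapply filter_imp; [| apply (locally_interior 0 1 t Ht)]. intros y Hy. apply Hfg. unfold I01; lra. }
  intros t Ht. apply (continuous_within_interval_eq 0 1); [lra | exact Ht | apply Cf, Ht | apply Cg, Ht | exact interior].
Qed.

Lemma is_max01_integral_nonneg (k : R -> R -> R) m :
  (forall t, I01 t -> ex_RInt (fun s => Rabs (k t s)) 0 1) ->
  is_max01 (fun t => RInt (fun s => Rabs (k t s)) 0 1) m -> 0 <= m.
Proof.
  intros Hex [_ [t [Ht <-]]]. apply RInt_ge_0; [lra | auto | intros; apply Rabs_pos].
Qed.

(** * Grid functions *)

Definition grid_index (n : nat) (t : R) : nat := Nat.min n (Z.to_nat (Int_part (INR n * t))).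

Lemma grid_index_le n t : (grid_index n t <= n)%nat.
Proof. apply Nat.le_min_l. Qed.

Lemma grid_index_spec n t : (0 < n)%nat -> I01 t ->
  INR (grid_index n t) / INR n <= t < INR (grid_index n t) / INR n + / INR n.
Proof.
  intros Hn Ht. assert (Hn' : 0 < INR n) by (apply lt_0_INR; lia).
  destruct (base_Int_part (INR n * t)) as [H1 H2].
  set (z := Int_part (INR n * t)) in *.
  assert (Hz : (0 <= z)%Z).
  { apply le_IZR. destruct Ht. assert (0 <= INR n * t) by nra.
    destruct (Z_lt_le_dec z 0) as [Hlt|]; [| apply IZR_le; auto].
    apply Z.lt_le_pred in Hlt. apply IZR_le in Hlt. simpl in Hlt. lra. }
  assert (Hm : INR (Z.to_nat z) = IZR z) by (rewrite INR_IZR_INZ, Z2Nat.id; auto).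
  assert (Hmn : (Z.to_nat z <= n)%nat) by (apply INR_le; rewrite Hm; destruct Ht; nra).
  unfold grid_index. fold z. rewrite Nat.min_r, Hm by auto.
  split.
  - apply (Rmult_le_reg_r (INR n)); auto. unfold Rdiv; rewrite Rmult_assoc, Rinv_l by lra. lra.
  - apply (Rmult_lt_reg_r (INR n)); auto.
    rewrite Rmult_plus_distr_r. unfold Rdiv; rewrite Rmult_assoc, Rinv_l by lra. lra.
Qed.

Lemma grid_index_mono n s t : (0 < n)%nat -> I01 s -> I01 t -> s <= t ->
  (grid_index n s <= grid_index n t)%nat.
Proof.
  intros Hn Hs Ht Hst. destruct (grid_index_spec n s Hn Hs) as [Hs1 _].
  destruct (grid_index_spec n t Hn Ht) as [_ Ht2].
  destruct (le_lt_dec (grid_index n s) (grid_index n t)) as [|Hlt]; auto. exfalso.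
  apply le_INR in Hlt. rewrite S_INR in Hlt.
  assert (Hn' : 0 < / INR n) by (apply Rinv_0_lt_compat, lt_0_INR; lia).
  assert ((INR (grid_index n t) + 1) * / INR n <= INR (grid_index n s) * / INR n)
    by (apply Rmult_le_compat_r; lra).
  unfold Rdiv in *. lra.
Qed.

Lemma grid_index_0 n : (0 < n)%nat -> grid_index n 0 = 0%nat.
Proof.
  intros Hn. unfold grid_index. rewrite Rmult_0_r.
  rewrite <- (Int_part_spec 0 0) by (simpl; lra). apply Nat.min_0_r.
Qed.

Lemma grid_index_1 n : (0 < n)%nat -> grid_index n 1 = n.
Proof.
  intros Hn. unfold grid_index. rewrite Rmult_1_r, INR_IZR_INZ.
  rewrite <- (Int_part_spec _ (Z.of_nat n)) by lra. rewrite Nat2Z.id. apply Nat.min_id.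
Qed.

Lemma grid_telescope (a b : nat -> R) (h c w E : R) (j d : nat) : 0 <= h ->
  (forall i, (j <= i < j + d)%nat -> Rabs (a (S i) - a i - h * b i) <= h * E) ->
  (forall i, (j <= i < j + d)%nat -> Rabs (b i - c) <= w) ->
  Rabs (a (j + d)%nat - a j - INR d * h * c) <= INR d * h * (w + E).
Proof.
  intros Hh Ha Hb. induction d as [|d IH].
  - rewrite Nat.add_0_r. simpl. replace (a j - a j - 0 * h * c) with 0 by ring. rewrite Rabs_R0. lra.
  - rewrite Nat.add_succ_r, S_INR.
    specialize (IH (fun i Hi => Ha i ltac:(lia)) (fun i Hi => Hb i ltac:(lia))).
    pose proof (Ha (j + d)%nat ltac:(lia)) as H1. pose proof (Hb (j + d)%nat ltac:(lia)) as H2.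
    replace (a (S (j + d)) - a j - (INR d + 1) * h * c) with
      ((a (j + d)%nat - a j - INR d * h * c) + (a (S (j + d)) - a (j + d)%nat - h * b (j + d)%nat)
       + h * (b (j + d)%nat - c)) by ring.
    eapply Rle_trans; [apply Rabs_triang3 |]. rewrite Rabs_mult_nonneg by lra.
    assert (h * Rabs (b (j + d)%nat - c) <= h * w) by (apply Rmult_le_compat_l; lra).
    nra.
Qed.

Lemma grid_nodes_between n s t i : (0 < n)%nat -> I01 s -> I01 t ->
  (grid_index n s <= i < grid_index n t)%nat -> s - / INR n < INR i / INR n <= t - / INR n.
Proof.
  intros Hn Hs Ht Hi.
  destruct (grid_index_spec n s Hn Hs) as [_ Hs2]. destruct (grid_index_spec n t Hn Ht) as [Ht1 _].
  assert (Hn' : 0 < / INR n) by (apply Rinv_0_lt_compat, lt_0_INR; lia).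
  assert (H1 : INR (grid_index n s) <= INR i) by (apply le_INR; lia).
  assert (H2 : INR i + 1 <= INR (grid_index n t)) by (rewrite <- S_INR; apply le_INR; lia).
  apply (Rmult_le_compat_r (/ INR n)) in H1, H2; [| lra | lra]. unfold Rdiv in *. lra.
Qed.

Section GridFunction.

Variables (n : nat) (a b : nat -> R) (E : R).
Hypothesis n_pos : (0 < n)%nat.
Hypothesis E_nonneg : 0 <= E.
Hypothesis grid_step : forall i, (i < n)%nat -> Rabs (a (S i) - a i - / INR n * b i) <= / INR n * E.

Lemma grid_lipschitz L : (forall i, (i < n)%nat -> Rabs (b i) <= L) ->
  forall i j, (i <= n)%nat -> (j <= n)%nat -> Rabs (a i - a j) <= (L + E) * Rabs (INR i / INR n - INR j / INR n).
Proof.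
  intros Hb.
  assert (Hh : 0 < / INR n) by (apply Rinv_0_lt_compat, lt_0_INR; lia).
  assert (key : forall i j, (j <= i <= n)%nat -> Rabs (a i - a j) <= (L + E) * (INR i / INR n - INR j / INR n)).
  { intros i j Hij. pose proof (grid_telescope a b (/ INR n) 0 L E j (i - j) ltac:(lra)) as D.
    replace (j + (i - j))%nat with i in D by lia.
    rewrite minus_INR, Rmult_0_r, Rminus_0_r in D by lia.
    replace ((INR i - INR j) * / INR n) with (INR i / INR n - INR j / INR n) in D by (unfold Rdiv; ring).
    rewrite Rmult_comm. apply D.
    - intros k Hk. apply grid_step. lia.
    - intros k Hk. rewrite Rminus_0_r. apply Hb. lia. }
  intros i j Hi Hj. destruct (le_lt_dec j i) as [H|H].
  - assert (INR j * / INR n <= INR i * / INR n) by (apply Rmult_le_compat_r; [lra | apply le_INR; lia]).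
    rewrite (Rabs_pos_eq (INR i / INR n - _)) by (unfold Rdiv; lra). apply key; lia.
  - assert (INR i * / INR n <= INR j * / INR n) by (apply Rmult_le_compat_r; [lra | apply le_INR; lia]).
    rewrite Rabs_minus_sym, (Rabs_minus_sym (INR i / INR n)), (Rabs_pos_eq (INR j / INR n - _))
      by (unfold Rdiv; lra).
    apply key; lia.
Qed.

Lemma grid_increment_oriented s t c w : I01 s -> I01 t -> s <= t -> 0 <= w ->
  (forall i, (grid_index n s <= i < grid_index n t)%nat -> Rabs (b i - c) <= w) ->
  Rabs (a (grid_index n t) - a (grid_index n s) - (t - s) * c)
    <= (t - s + / INR n) * (w + E) + / INR n * Rabs c.
Proof.
  intros Hs Ht Hst Hw Hb. set (h := / INR n).
  assert (Hh : 0 < h) by (apply Rinv_0_lt_compat, lt_0_INR; lia).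
  destruct (grid_index_spec n s n_pos Hs) as [Ks1 Ks2]. destruct (grid_index_spec n t n_pos Ht) as [Kt1 Kt2].
  pose proof (grid_index_mono n s t n_pos Hs Ht Hst) as Hm. fold h in Ks2, Kt2.
  set (ks := grid_index n s) in *. set (kt := grid_index n t) in *.
  pose proof (grid_telescope a b h c w E ks (kt - ks) ltac:(lra)) as D.
  replace (ks + (kt - ks))%nat with kt in D by lia.
  rewrite minus_INR in D by lia.
  replace ((INR kt - INR ks) * h) with (INR kt / INR n - INR ks / INR n) in D by (unfold h, Rdiv; ring).
  specialize (D (fun i Hi => grid_step i ltac:(pose proof (grid_index_le n t); lia)) (fun i Hi => Hb i ltac:(lia))).
  replace (a kt - a ks - (t - s) * c) with ((a kt - a ks - (INR kt / INR n - INR ks / INR n) * c)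
    + ((INR kt / INR n - INR ks / INR n) - (t - s)) * c) by ring.
  eapply Rle_trans; [apply Rabs_triang |]. rewrite Rabs_mult.
  assert (Rabs (INR kt / INR n - INR ks / INR n - (t - s)) <= h) by (apply Rabs_le_between; lra).
  assert (Rabs (INR kt / INR n - INR ks / INR n - (t - s)) * Rabs c <= h * Rabs c)
    by (apply Rmult_le_compat_r; auto using Rabs_pos).
  assert ((INR kt / INR n - INR ks / INR n) * (w + E) <= (t - s + h) * (w + E))
    by (apply Rmult_le_compat_r; lra).
  lra.
Qed.

Lemma grid_increment s t c w : I01 s -> I01 t -> 0 <= w ->
  (forall i, (i < n)%nat -> Rabs (INR i / INR n - s) <= Rabs (t - s) + / INR n -> Rabs (b i - c) <= w) ->
  Rabs (a (grid_index n t) - a (grid_index n s) - (t - s) * c)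
    <= (Rabs (t - s) + / INR n) * (w + E) + / INR n * Rabs c.
Proof.
  intros Hs Ht Hw Hb. assert (Hh : 0 < / INR n) by (apply Rinv_0_lt_compat, lt_0_INR; lia).
  destruct (Rle_lt_dec s t) as [Hst|Hts].
  - rewrite (Rabs_pos_eq (t - s)) by lra. apply grid_increment_oriented; auto.
    intros i Hi. pose proof (grid_nodes_between n s t i n_pos Hs Ht Hi).
    apply Hb; [pose proof (grid_index_le n t); lia |].
    rewrite (Rabs_pos_eq (t - s)) by lra. apply Rabs_le_between. lra.
  - rewrite (Rabs_left (t - s)) by lra.
    replace (a (grid_index n t) - a (grid_index n s) - (t - s) * c)
      with (- (a (grid_index n s) - a (grid_index n t) - (s - t) * c)) by ring.
    rewrite Rabs_Ropp. replace (- (t - s)) with (s - t) by ring. apply grid_increment_oriented; auto; try lra.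
    intros i Hi. pose proof (grid_nodes_between n t s i n_pos Ht Hs Hi).
    apply Hb; [pose proof (grid_index_le n s); lia |].
    rewrite (Rabs_left (t - s)) by lra. apply Rabs_le_between. lra.
Qed.

End GridFunction.

Lemma increment_bound (a b : nat -> nat -> R) (E : nat -> R) (v : R -> R) (x y c w : R) :
  I01 x -> I01 y -> 0 <= w ->
  (forall N i, (i < S N)%nat ->
     Rabs (a N (S i) - a N i - / INR (S N) * b N i) <= / INR (S N) * E N) ->
  (forall eta, 0 < eta -> exists N, 0 <= E N <= eta /\ / INR (S N) <= eta /\
     Rabs (a N (grid_index (S N) x) - v x) <= eta /\ Rabs (a N (grid_index (S N) y) - v y) <= eta /\
     forall i, (i < S N)%nat -> Rabs (INR i / INR (S N) - x) <= Rabs (y - x) + / INR (S N) ->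
       Rabs (b N i - c) <= w + eta) ->
  Rabs (v y - v x - (y - x) * c) <= Rabs (y - x) * w.
Proof.
  intros Hx Hy Hw Hstep Happrox.
  apply (le_of_le_add_eps _ _ (4 + 2 * Rabs (y - x) + w + Rabs c)). intros eta Heta.
  destruct (Happrox eta ltac:(lra)) as [N [HE [Hh [Ax [Ay Hb]]]]].
  pose proof (inv_INR_bounds (S N) ltac:(lia)) as Hh0.
  pose proof (grid_increment (S N) (a N) (b N) (E N) ltac:(lia) ltac:(lra) (Hstep N) x y c (w + eta)
    Hx Hy ltac:(lra) Hb) as Hinc.
  replace (v y - v x - (y - x) * c) with
    ((a N (grid_index (S N) y) - a N (grid_index (S N) x) - (y - x) * c)
     - (a N (grid_index (S N) y) - v y) + (a N (grid_index (S N) x) - v x)) by ring.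
  eapply Rle_trans; [apply Rabs_triang3 |]. rewrite Rabs_Ropp.
  pose proof (Rabs_pos (y - x)). pose proof (Rabs_pos c).
  assert ((Rabs (y - x) + / INR (S N)) * (w + eta + E N) <= (Rabs (y - x) + eta) * (w + 2 * eta))
    by (apply Rmult_le_compat; lra).
  assert (/ INR (S N) * Rabs c <= eta * Rabs c) by (apply Rmult_le_compat_r; lra).
  nra.
Qed.

Lemma is_derive_of_increment (v : R -> R) x c : 0 < x < 1 ->
  (forall eps, 0 < eps -> exists del, 0 < del /\ forall y, I01 y -> Rabs (y - x) < del ->
     Rabs (v y - v x - (y - x) * c) <= eps * Rabs (y - x)) ->
  is_derive v x c.
Proof.
  intros Hx H. apply is_derive_Reals. intros eps He.
  destruct (H (eps / 2) ltac:(lra)) as [del [Hdel Hv]].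
  assert (Hpos : 0 < Rmin del (Rmin x (1 - x))) by (repeat apply Rmin_glb_lt; lra).
  exists (mkposreal _ Hpos). simpl. intros h Hh0 Hh.
  pose proof (Rmin_l del (Rmin x (1 - x))). pose proof (Rmin_r del (Rmin x (1 - x))).
  pose proof (Rmin_l x (1 - x)). pose proof (Rmin_r x (1 - x)).
  assert (Hy : I01 (x + h)) by (apply Rabs_def2 in Hh; unfold I01; lra).
  specialize (Hv (x + h) Hy). replace (x + h - x) with h in Hv by ring.
  assert (Ha : 0 < Rabs h) by (apply Rabs_pos_lt; auto).
  replace ((v (x + h) - v x) / h - c) with ((v (x + h) - v x - h * c) / h) by (field; auto).
  unfold Rdiv. rewrite Rabs_mult, Rabs_inv.
  apply (Rmult_lt_reg_r (Rabs h)); auto. rewrite Rmult_assoc, Rinv_l by lra.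
  specialize (Hv ltac:(lra)). nra.
Qed.

(** * A Taylor scheme and the shooting parameter *)

Definition continuous4 (F : R -> R -> R -> R -> R) : Prop :=
  forall t x y z eps, 0 < eps -> exists del, 0 < del /\
  forall t' x' y' z', Rabs (t' - t) < del -> Rabs (x' - x) < del -> Rabs (y' - y) < del ->
    Rabs (z' - z) < del -> Rabs (F t' x' y' z' - F t x y z) < eps.

Lemma taylor_increments_close h x y z f x' y' z' f' e : 0 <= h <= 1 ->
  Rabs (x' - x) < e -> Rabs (y' - y) < e -> Rabs (z' - z) < e -> Rabs (f' - f) < e ->
  Rabs (x' + h * y' + h * h / 2 * z' + h * h * h / 6 * f' - (x + h * y + h * h / 2 * z + h * h * h / 6 * f))
    < 4 * e /\
  Rabs (y' + h * z' + h * h / 2 * f' - (y + h * z + h * h / 2 * f)) < 4 * e /\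
  Rabs (z' + h * f' - (z + h * f)) < 4 * e.
Proof.
  intros Hh Hx Hy Hz Hf. assert (He : 0 < e) by (pose proof (Rabs_pos (x' - x)); lra).
  assert (coef : forall c a, 0 <= c <= 1 -> Rabs (c * a) <= Rabs a).
  { intros c a Hc. rewrite Rabs_mult_nonneg by lra. pose proof (Rabs_pos a). nra. }
  assert (H2 : 0 <= h * h / 2 <= 1) by (split; nra).
  assert (H3 : 0 <= h * h * h / 6 <= 1) by (assert (0 <= h * h <= 1) by (split; nra); split; nra).
  pose proof (coef h (y' - y) Hh). pose proof (coef h (z' - z) Hh). pose proof (coef h (f' - f) Hh).
  pose proof (coef _ (z' - z) H2). pose proof (coef _ (f' - f) H2). pose proof (coef _ (f' - f) H3).
  split; [| split].
  - replace (_ - _) with ((x' - x) + h * (y' - y) + h * h / 2 * (z' - z) + h * h * h / 6 * (f' - f)) by ring.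
    eapply Rle_lt_trans; [apply Rabs_triang4 | lra].
  - replace (_ - _) with ((y' - y) + h * (z' - z) + h * h / 2 * (f' - f)) by ring.
    eapply Rle_lt_trans; [apply Rabs_triang3 | lra].
  - replace (_ - _) with ((z' - z) + h * (f' - f)) by ring.
    eapply Rle_lt_trans; [apply Rabs_triang | lra].
Qed.

Section TaylorScheme.

Variable F : R -> R -> R -> R -> R.
Variables p q r : R.

Definition taylor_step (h t : R) (s : R * R * R) : R * R * R :=
  let '(x, y, z) := s in let f := F t x y z in
  (x + h * y + h * h / 2 * z + h * h * h / 6 * f, y + h * z + h * h / 2 * f, z + h * f).

Fixpoint scheme (n : nat) (lam : R) (k : nat) : R * R * R :=
  match k with
  | O => (lam * p, lam * q, lam * r)
  | S k' => taylor_step (/ INR n) (INR k' / INR n) (scheme n lam k')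
  end.

Definition node_u n lam k := fst (fst (scheme n lam k)).
Definition node_u1 n lam k := snd (fst (scheme n lam k)).
Definition node_u2 n lam k := snd (scheme n lam k).
Definition node_f n lam k := F (INR k / INR n) (node_u n lam k) (node_u1 n lam k) (node_u2 n lam k).

Lemma scheme_S n lam k (h := / INR n) :
  node_u n lam (S k) = node_u n lam k + h * node_u1 n lam k + h * h / 2 * node_u2 n lam k
                       + h * h * h / 6 * node_f n lam k /\
  node_u1 n lam (S k) = node_u1 n lam k + h * node_u2 n lam k + h * h / 2 * node_f n lam k /\
  node_u2 n lam (S k) = node_u2 n lam k + h * node_f n lam k.
Proof.
  unfold node_f, node_u, node_u1, node_u2, h; simpl.
  destruct (scheme n lam k) as [[x y] z]; simpl; repeat split; reflexivity.
Qed.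

Variable M : R.
Hypothesis F_bound : forall t x y z, Rabs (F t x y z) <= M.

Lemma M_nonneg : 0 <= M.
Proof. eapply Rle_trans; [apply Rabs_pos | apply (F_bound 0 0 0 0)]. Qed.

Lemma scheme_dev n lam k (T := INR k / INR n) : (0 < n)%nat ->
  Rabs (node_u2 n lam k - lam * r) <= M * T /\
  Rabs (node_u1 n lam k - lam * (q + r * T)) <= M * (T * T / 2) /\
  Rabs (node_u n lam k - lam * (p + q * T + r * (T * T / 2))) <= M * (T * T * T / 6).
Proof.
  intros Hn. subst T. pose proof M_nonneg as HM.
  pose proof (inv_INR_bounds n Hn) as [Hh0 _].
  induction k as [|k [IZ [IY IX]]].
  - simpl. unfold Rdiv. rewrite Rmult_0_l.
    repeat split; match goal with |- Rabs ?e <= _ => replace e with 0 by (unfold node_u, node_u1, node_u2; simpl; ring) end;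
    rewrite Rabs_R0; lra.
  - destruct (scheme_S n lam k) as [EX [EY EZ]]. rewrite EX, EY, EZ.
    set (h := / INR n) in *.
    assert (HT : 0 <= INR k / INR n) by (apply Rdiv_le_0_compat; [apply pos_INR | apply lt_0_INR; lia]).
    replace (INR (S k) / INR n) with (INR k / INR n + h) by (unfold h; rewrite S_INR; field; apply not_0_INR; lia).
    set (T := INR k / INR n) in *.
    set (dX := node_u n lam k - lam * (p + q * T + r * (T * T / 2))) in *.
    set (dY := node_u1 n lam k - lam * (q + r * T)) in *.
    set (dZ := node_u2 n lam k - lam * r) in *.
    set (f := node_f n lam k).
    assert (Hf : Rabs f <= M) by apply F_bound.
    assert (H2 : 0 <= h * h / 2) by nra.
    assert (H3 : 0 <= h * h * h / 6) by (assert (0 <= h * h * h) by (apply Rmult_le_pos; nra); lra).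
    split; [|split].
    + replace (node_u2 n lam k + h * f - lam * r) with (dZ + h * f) by (unfold dZ; ring).
      eapply Rle_trans; [apply Rabs_triang |]. rewrite Rabs_mult_nonneg by lra.
      assert (h * Rabs f <= h * M) by (apply Rmult_le_compat_l; lra). nra.
    + replace (node_u1 n lam k + h * node_u2 n lam k + h * h / 2 * f - lam * (q + r * (T + h)))
        with (dY + h * dZ + h * h / 2 * f) by (unfold dY, dZ; ring).
      eapply Rle_trans; [apply Rabs_triang3 |]. rewrite !Rabs_mult_nonneg by lra.
      assert (h * Rabs dZ <= h * (M * T)) by (apply Rmult_le_compat_l; lra).
      assert (h * h / 2 * Rabs f <= h * h / 2 * M) by (apply Rmult_le_compat_l; lra).
      nra.
    + replace (node_u n lam k + h * node_u1 n lam k + h * h / 2 * node_u2 n lam k + h * h * h / 6 * f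
               - lam * (p + q * (T + h) + r * ((T + h) * (T + h) / 2)))
        with (dX + h * dY + h * h / 2 * dZ + h * h * h / 6 * f) by (unfold dX, dY, dZ; field).
      eapply Rle_trans; [apply Rabs_triang4 |]. rewrite !Rabs_mult_nonneg by lra.
      assert (h * Rabs dY <= h * (M * (T * T / 2))) by (apply Rmult_le_compat_l; lra).
      assert (h * h / 2 * Rabs dZ <= h * h / 2 * (M * T)) by (apply Rmult_le_compat_l; lra).
      assert (h * h * h / 6 * Rabs f <= h * h * h / 6 * M) by (apply Rmult_le_compat_l; lra).
      nra.
Qed.

Lemma scheme_bounds n lam k L : (0 < n)%nat -> (k <= n)%nat -> Rabs lam <= L ->
  Rabs (node_u2 n lam k) <= L * Rabs r + M /\ Rabs (node_u1 n lam k) <= L * (Rabs q + Rabs r) + M /\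
  Rabs (node_u n lam k) <= L * (Rabs p + Rabs q + Rabs r) + M.
Proof.
  intros Hn Hk HL. destruct (scheme_dev n lam k Hn) as [HZ [HY HX]].
  assert (Hn' : 0 < INR n) by (apply lt_0_INR; lia).
  assert (HT : 0 <= INR k / INR n <= 1).
  { split; [apply Rdiv_le_0_compat; auto; apply pos_INR |].
    apply (Rmult_le_reg_r (INR n)); auto. unfold Rdiv. rewrite Rmult_assoc, Rinv_l, Rmult_1_r by lra.
    rewrite Rmult_1_l. apply le_INR; auto. }
  set (T := INR k / INR n) in *.
  pose proof M_nonneg. pose proof (Rabs_pos p); pose proof (Rabs_pos q); pose proof (Rabs_pos r).
  pose proof (Rabs_pos lam).
  assert (HT2 : 0 <= T * T <= 1) by (split; nra).
  assert (HT3 : 0 <= T * T * T <= 1) by (split; nra).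
  assert (Hc1 : Rabs (q + r * T) <= Rabs q + Rabs r).
  { eapply Rle_trans; [apply Rabs_triang |]. rewrite Rabs_mult, (Rabs_pos_eq T) by lra. nra. }
  assert (Hc2 : Rabs (p + q * T + r * (T * T / 2)) <= Rabs p + Rabs q + Rabs r).
  { eapply Rle_trans; [apply Rabs_triang3 |].
    rewrite !Rabs_mult, (Rabs_pos_eq T), (Rabs_pos_eq (T * T / 2)) by lra. nra. }
  split; [|split].
  - replace (node_u2 n lam k) with ((node_u2 n lam k - lam * r) + lam * r) by ring.
    eapply Rle_trans; [apply Rabs_triang |]. rewrite Rabs_mult.
    assert (Rabs lam * Rabs r <= L * Rabs r) by (apply Rmult_le_compat_r; lra). nra.
  - replace (node_u1 n lam k) with ((node_u1 n lam k - lam * (q + r * T)) + lam * (q + r * T)) by ring.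
    eapply Rle_trans; [apply Rabs_triang |]. rewrite Rabs_mult.
    assert (Rabs lam * Rabs (q + r * T) <= L * (Rabs q + Rabs r)) by (apply Rmult_le_compat; auto using Rabs_pos).
    nra.
  - replace (node_u n lam k) with ((node_u n lam k - lam * (p + q * T + r * (T * T / 2)))
                                  + lam * (p + q * T + r * (T * T / 2))) by ring.
    eapply Rle_trans; [apply Rabs_triang |]. rewrite Rabs_mult.
    assert (Rabs lam * Rabs (p + q * T + r * (T * T / 2)) <= L * (Rabs p + Rabs q + Rabs r))
      by (apply Rmult_le_compat; auto using Rabs_pos).
    nra.
Qed.

Lemma scheme_steps n lam k (h := / INR n) : (0 < n)%nat ->
  node_u2 n lam (S k) - node_u2 n lam k - h * node_f n lam k = 0 /\
  Rabs (node_u1 n lam (S k) - node_u1 n lam k - h * node_u2 n lam k) <= h * (h * M) /\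
  Rabs (node_u n lam (S k) - node_u n lam k - h * node_u1 n lam k)
    <= h * (h * (Rabs (node_u2 n lam k) + M)).
Proof.
  intros Hn. destruct (inv_INR_bounds n Hn) as [Hh0 Hh1]. fold h in Hh0, Hh1.
  destruct (scheme_S n lam k) as [EX [EY EZ]]. fold h in EX, EY, EZ. rewrite EX, EY, EZ.
  pose proof (F_bound (INR k / INR n) (node_u n lam k) (node_u1 n lam k) (node_u2 n lam k)) as Hf.
  fold (node_f n lam k) in Hf. set (f := node_f n lam k) in *. pose proof (Rabs_pos f).
  assert (0 <= h * h) by nra. assert (h * h * h <= h * h) by nra.
  split; [ring | split].
  - replace (node_u1 n lam k + h * node_u2 n lam k + h * h / 2 * f - node_u1 n lam k - h * node_u2 n lam k)
      with (h * h / 2 * f) by ring.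
    rewrite Rabs_mult_nonneg by nra.
    assert (h * h / 2 * Rabs f <= h * h / 2 * M) by (apply Rmult_le_compat_l; lra). nra.
  - replace (node_u n lam k + h * node_u1 n lam k + h * h / 2 * node_u2 n lam k + h * h * h / 6 * f
             - node_u n lam k - h * node_u1 n lam k)
      with (h * h / 2 * node_u2 n lam k + h * h * h / 6 * f) by ring.
    eapply Rle_trans; [apply Rabs_triang |]. rewrite !Rabs_mult_nonneg by nra.
    pose proof (Rabs_pos (node_u2 n lam k)).
    assert (h * h * h / 6 * Rabs f <= h * h * h / 6 * M) by (apply Rmult_le_compat_l; nra).
    nra.
Qed.

Hypothesis F_cont : continuous4 F.

Lemma scheme_continuous_in_lam n k : (0 < n)%nat -> forall lam0 eps, 0 < eps -> exists del, 0 < del /\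
  forall lam, Rabs (lam - lam0) < del ->
  Rabs (node_u n lam k - node_u n lam0 k) < eps /\ Rabs (node_u1 n lam k - node_u1 n lam0 k) < eps /\
  Rabs (node_u2 n lam k - node_u2 n lam0 k) < eps.
Proof.
  intros Hn. pose proof (inv_INR_bounds n Hn) as Hh.
  induction k as [|k IH]; intros lam0 eps He.
  - set (A := Rabs p + Rabs q + Rabs r + 1).
    pose proof (Rabs_pos p); pose proof (Rabs_pos q); pose proof (Rabs_pos r).
    assert (HA : 0 < A) by (unfold A; lra).
    exists (eps / A). split; [apply Rdiv_lt_0_compat; lra |]. intros lam Hl.
    assert (Hd : Rabs (lam - lam0) * A < eps).
    { apply (Rmult_lt_compat_r A) in Hl; auto. unfold Rdiv in Hl. rewrite Rmult_assoc, Rinv_l in Hl; lra. }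
    pose proof (Rabs_pos (lam - lam0)). unfold node_u, node_u1, node_u2; simpl.
    repeat split; rewrite <- Rmult_minus_distr_r, Rabs_mult; unfold A in Hd; nra.
  - destruct (F_cont (INR k / INR n) (node_u n lam0 k) (node_u1 n lam0 k) (node_u2 n lam0 k) (eps / 4))
      as [dF [HdF HF]]; [lra |].
    destruct (IH lam0 (Rmin dF (eps / 4))) as [del [Hdel Hc]]; [apply Rmin_glb_lt; lra |].
    exists del; split; auto. intros lam Hl. destruct (Hc lam Hl) as [HX [HY HZ]].
    pose proof (Rmin_l dF (eps / 4)). pose proof (Rmin_r dF (eps / 4)).
    assert (Hf : Rabs (node_f n lam k - node_f n lam0 k) < eps / 4).
    { apply HF; try lra. unfold Rminus. rewrite Rplus_opp_r, Rabs_R0; lra. }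
    destruct (scheme_S n lam k) as [-> [-> ->]]. destruct (scheme_S n lam0 k) as [-> [-> ->]].
    replace eps with (4 * (eps / 4)) by field. apply taylor_increments_close; auto; lra.
Qed.

Variables a3 b3 c3 : R.

Definition shooting_residual n lam := Bform a3 b3 c3 (node_u n lam n) (node_u1 n lam n) (node_u2 n lam n).

(* [B3] applied at [t = 1] to the solution of [u''' = 0] with initial data [(p, q, r)] *)
Definition shooting_slope := Bform a3 b3 c3 (p + q + r / 2) (q + r) r.
Definition shooting_error := (Rabs a3 / 6 + Rabs b3 / 2 + Rabs c3) * M.
Definition shooting_radius := shooting_error / Rabs shooting_slope + 1.

Lemma shooting_residual_continuous n : (0 < n)%nat -> continuity (shooting_residual n).
Proof.
  intros Hn x eps He. simpl. unfold R_dist.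
  set (A := Rabs a3 + Rabs b3 + Rabs c3 + 1).
  assert (HA : 0 < A) by (unfold A; pose proof (Rabs_pos a3); pose proof (Rabs_pos b3); pose proof (Rabs_pos c3); lra).
  destruct (scheme_continuous_in_lam n n Hn x (eps / A)) as [del [Hdel Hc]]; [apply Rdiv_lt_0_compat; lra |].
  exists del; split; auto. intros y [_ Hy]. destruct (Hc y Hy) as [HX [HY HZ]].
  unfold shooting_residual, Bform.
  replace (a3 * node_u n y n + b3 * node_u1 n y n + c3 * node_u2 n y n
           - (a3 * node_u n x n + b3 * node_u1 n x n + c3 * node_u2 n x n))
    with (a3 * (node_u n y n - node_u n x n) + b3 * (node_u1 n y n - node_u1 n x n)
          + c3 * (node_u2 n y n - node_u2 n x n)) by ring.
  eapply Rle_lt_trans; [apply Rabs_triang3 |]. rewrite !Rabs_mult.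
  pose proof (Rabs_pos a3); pose proof (Rabs_pos b3); pose proof (Rabs_pos c3).
  assert (Rabs a3 * Rabs (node_u n y n - node_u n x n) <= Rabs a3 * (eps / A)) by (apply Rmult_le_compat_l; lra).
  assert (Rabs b3 * Rabs (node_u1 n y n - node_u1 n x n) <= Rabs b3 * (eps / A)) by (apply Rmult_le_compat_l; lra).
  assert (Rabs c3 * Rabs (node_u2 n y n - node_u2 n x n) <= Rabs c3 * (eps / A)) by (apply Rmult_le_compat_l; lra).
  assert (0 < eps / A) by (apply Rdiv_lt_0_compat; lra).
  assert (Rabs a3 * (eps / A) + Rabs b3 * (eps / A) + Rabs c3 * (eps / A) = eps - eps / A) by (unfold A; field; lra).
  lra.
Qed.

Lemma shooting_residual_dev n lam : (0 < n)%nat ->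
  Rabs (shooting_residual n lam - lam * shooting_slope) <= shooting_error.
Proof.
  intros Hn. destruct (scheme_dev n lam n Hn) as [HZ [HY HX]].
  replace (INR n / INR n) with 1 in HZ, HY, HX by (field; apply not_0_INR; lia).
  unfold shooting_residual, shooting_slope, shooting_error, Bform.
  replace (a3 * node_u n lam n + b3 * node_u1 n lam n + c3 * node_u2 n lam n
           - lam * (a3 * (p + q + r / 2) + b3 * (q + r) + c3 * r))
    with (a3 * (node_u n lam n - lam * (p + q * 1 + r * (1 * 1 / 2)))
          + b3 * (node_u1 n lam n - lam * (q + r * 1)) + c3 * (node_u2 n lam n - lam * r)) by field.
  eapply Rle_trans; [apply Rabs_triang3 |]. rewrite !Rabs_mult.
  pose proof (Rabs_pos a3); pose proof (Rabs_pos b3); pose proof (Rabs_pos c3).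
  assert (Rabs a3 * Rabs (node_u n lam n - lam * (p + q * 1 + r * (1 * 1 / 2))) <= Rabs a3 * (M * (1 * 1 * 1 / 6)))
    by (apply Rmult_le_compat_l; lra).
  assert (Rabs b3 * Rabs (node_u1 n lam n - lam * (q + r * 1)) <= Rabs b3 * (M * (1 * 1 / 2)))
    by (apply Rmult_le_compat_l; lra).
  assert (Rabs c3 * Rabs (node_u2 n lam n - lam * r) <= Rabs c3 * (M * 1)) by (apply Rmult_le_compat_l; lra).
  lra.
Qed.

Hypothesis slope_neq0 : shooting_slope <> 0.

Lemma shooting_radius_pos : 0 < shooting_radius.
Proof.
  unfold shooting_radius, shooting_error. pose proof M_nonneg.
  pose proof (Rabs_pos a3); pose proof (Rabs_pos b3); pose proof (Rabs_pos c3).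
  assert (0 <= (Rabs a3 / 6 + Rabs b3 / 2 + Rabs c3) * M / Rabs shooting_slope).
  { apply Rdiv_le_0_compat; [apply Rmult_le_pos; lra | apply Rabs_pos_lt; auto]. }
  lra.
Qed.

(* By [shooting_residual_dev] the residual has opposite signs at [- shooting_radius] and [shooting_radius]. *)
Lemma shooting_root n : (0 < n)%nat ->
  exists lam, Rabs lam <= shooting_radius /\ shooting_residual n lam = 0.
Proof.
  intros Hn. pose proof shooting_radius_pos as HL.
  assert (Hac : 0 < Rabs shooting_slope) by (apply Rabs_pos_lt; auto).
  assert (HLc : shooting_radius * Rabs shooting_slope = shooting_error + Rabs shooting_slope)
    by (unfold shooting_radius; field; lra).
  pose proof (shooting_residual_dev n (- shooting_radius) Hn) as D1.
  pose proof (shooting_residual_dev n shooting_radius Hn) as D2.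
  apply Rabs_le_between in D1, D2.
  destruct (Rlt_or_le 0 shooting_slope) as [Hp|Hneg].
  - rewrite Rabs_pos_eq in HLc by lra.
    destruct (IVT (shooting_residual n) (- shooting_radius) shooting_radius (shooting_residual_continuous n Hn))
      as [z [Hz1 Hz2]]; try lra.
    exists z; split; auto. apply Rabs_le_between; lra.
  - assert (shooting_slope < 0) by (destruct Hneg; auto; contradiction).
    rewrite Rabs_left in HLc by lra.
    destruct (IVT (fun l => - shooting_residual n l) (- shooting_radius) shooting_radius) as [z [Hz1 Hz2]];
      try lra.
    { apply continuity_opp, shooting_residual_continuous, Hn. }
    exists z; split; [apply Rabs_le_between |]; lra.
Qed.

Section ShootingLimit.

Variable lam : nat -> R.
Hypothesis lam_radius : forall N, Rabs (lam N) <= shooting_radius.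
Hypothesis lam_root : forall N, shooting_residual (S N) (lam N) = 0.

(* [grid N j k] approximates the [j]-th derivative of the solution at [k / (N + 1)];
   [j = 3] stands for the value of [F] there. *)
Definition grid (N j k : nat) : R :=
  match j with
  | 0 => node_u (S N) (lam N) k
  | 1 => node_u1 (S N) (lam N) k
  | 2 => node_u2 (S N) (lam N) k
  | _ => node_f (S N) (lam N) k
  end.

Definition grid_bound (j : nat) : R :=
  match j with
  | 0 => shooting_radius * (Rabs p + Rabs q + Rabs r) + M
  | 1 => shooting_radius * (Rabs q + Rabs r) + M
  | 2 => shooting_radius * Rabs r + M
  | _ => M
  end.

Definition step_error := grid_bound 2 + 2 * M.
Definition grid_lip (j : nat) := grid_bound (S j) + step_error.

Definition grid_lip_max := grid_lip 0 + grid_lip 1 + grid_lip 2.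

Definition grid_at (N : nat) (jt : nat * R) : R := grid N (fst jt) (grid_index (S N) (snd jt)).

Lemma grid_bound_nonneg j : 0 <= grid_bound j.
Proof.
  pose proof M_nonneg. pose proof shooting_radius_pos.
  pose proof (Rabs_pos p); pose proof (Rabs_pos q); pose proof (Rabs_pos r).
  destruct j as [|[|[|j]]]; simpl; nra.
Qed.

Lemma step_error_nonneg : 0 <= step_error.
Proof. unfold step_error. pose proof (grid_bound_nonneg 2). pose proof M_nonneg. lra. Qed.

Lemma grid_lip_bounds k : (k <= 2)%nat -> 0 <= grid_lip k <= grid_lip_max.
Proof.
  intros Hk. assert (Hnn : forall j, 0 <= grid_lip j).
  { intros j. unfold grid_lip, step_error.
    pose proof (grid_bound_nonneg (S j)); pose proof (grid_bound_nonneg 2); pose proof M_nonneg. lra. }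
  pose proof (Hnn 0%nat); pose proof (Hnn 1%nat); pose proof (Hnn 2%nat).
  unfold grid_lip_max. destruct k as [|[|[|k]]]; try lia; split; auto; lra.
Qed.

Lemma grid_bounded N j k : (k <= S N)%nat -> Rabs (grid N j k) <= grid_bound j.
Proof.
  intros Hk. destruct (scheme_bounds (S N) (lam N) k shooting_radius ltac:(lia) Hk (lam_radius N)) as [HZ [HY HX]].
  destruct j as [|[|[|j]]]; cbn [grid grid_bound]; auto. apply F_bound.
Qed.

Lemma grid_step N j i : (j <= 2)%nat -> (i < S N)%nat ->
  Rabs (grid N j (S i) - grid N j i - / INR (S N) * grid N (S j) i) <= / INR (S N) * (/ INR (S N) * step_error).
Proof.
  intros Hj Hi. pose proof (inv_INR_bounds (S N) ltac:(lia)) as [Hh0 _].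
  destruct (scheme_steps (S N) (lam N) i ltac:(lia)) as [HZ [HY HX]].
  pose proof (grid_bound_nonneg 2). pose proof M_nonneg. unfold step_error.
  assert (Hmono : forall e, e <= grid_bound 2 + 2 * M ->
    / INR (S N) * (/ INR (S N) * e) <= / INR (S N) * (/ INR (S N) * (grid_bound 2 + 2 * M))).
  { intros e He. apply Rmult_le_compat_l; [lra |]. apply Rmult_le_compat_l; lra. }
  destruct j as [|[|[|j]]]; cbn [grid]; try lia.
  - eapply Rle_trans; [apply HX | apply Hmono].
    pose proof (grid_bounded N 2 i ltac:(lia)). cbn [grid grid_bound] in *. lra.
  - eapply Rle_trans; [apply HY | apply Hmono; lra].
  - rewrite HZ, Rabs_R0. apply Rmult_le_pos; [lra |]. apply Rmult_le_pos; lra.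
Qed.

Lemma grid_lipschitz_nodes N j i k : (j <= 2)%nat -> (i <= S N)%nat -> (k <= S N)%nat ->
  Rabs (grid N j i - grid N j k) <= grid_lip j * Rabs (INR i / INR (S N) - INR k / INR (S N)).
Proof.
  intros Hj Hi Hk. pose proof (inv_INR_bounds (S N) ltac:(lia)) as [Hh0 Hh1]. pose proof step_error_nonneg.
  eapply Rle_trans.
  - apply (grid_lipschitz (S N) (grid N j) (grid N (S j)) (/ INR (S N) * step_error) ltac:(lia)
      (fun m Hm => grid_step N j m Hj Hm) (grid_bound (S j))
      (fun m Hm => grid_bounded N (S j) m ltac:(lia)) i k Hi Hk).
  - apply Rmult_le_compat_r; [apply Rabs_pos |]. unfold grid_lip.
    assert (/ INR (S N) * step_error <= step_error) by nra. lra.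
Qed.

Lemma grid_at_bounded N jt : Rabs (grid_at N jt) <= grid_bound 0 + grid_bound 1 + grid_bound 2 + M.
Proof.
  destruct jt as [j t]. unfold grid_at; simpl.
  pose proof (grid_bounded N j (grid_index (S N) t) (grid_index_le _ _)) as H.
  pose proof (grid_bound_nonneg 0); pose proof (grid_bound_nonneg 1); pose proof (grid_bound_nonneg 2).
  pose proof M_nonneg. destruct j as [|[|[|j]]]; simpl in *; lra.
Qed.

Variable g : nat * R -> R.
Hypothesis g_cluster : cluster_point grid_at g.

Lemma cluster_index l eta rho : 0 < eta -> 0 < rho ->
  exists N, / INR (S N) <= rho /\ forall z, In z l -> Rabs (grid_at N z - g z) < eta.
Proof.
  intros He Hr. destruct (inv_INR_S_small rho Hr) as [N0 HN0].
  destruct (g_cluster l eta N0 He) as [N [HN Hl]]. exists N. auto.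
Qed.

Lemma grid_near_limit N k x d eta : (k <= 2)%nat -> I01 x -> Rabs (grid_at N (k, x) - g (k, x)) < eta ->
  forall i, (i < S N)%nat -> Rabs (INR i / INR (S N) - x) <= d + / INR (S N) ->
  Rabs (grid N k i - g (k, x)) <= grid_lip k * (d + 2 * / INR (S N)) + eta.
Proof.
  intros Hk Hx Happ i Hi Hix. unfold grid_at in Happ; simpl in Happ.
  destruct (grid_index_spec (S N) x ltac:(lia) Hx) as [K1 K2].
  pose proof (grid_lipschitz_nodes N k i (grid_index (S N) x) Hk ltac:(lia) (grid_index_le _ _)) as HL.
  assert (Hd : Rabs (INR i / INR (S N) - INR (grid_index (S N) x) / INR (S N)) <= d + 2 * / INR (S N)).
  { apply Rabs_le_between. apply Rabs_le_between in Hix. lra. }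
  assert (grid_lip k * Rabs (INR i / INR (S N) - INR (grid_index (S N) x) / INR (S N))
          <= grid_lip k * (d + 2 * / INR (S N))).
  { apply Rmult_le_compat_l; auto. unfold grid_lip. pose proof (grid_bound_nonneg (S k)).
    pose proof step_error_nonneg. lra. }
  replace (grid N k i - g (k, x)) with ((grid N k i - grid N k (grid_index (S N) x))
    + (grid N k (grid_index (S N) x) - g (k, x))) by ring.
  eapply Rle_trans; [apply Rabs_triang |]. lra.
Qed.

Lemma limit_increment j x y c w : (j <= 2)%nat -> I01 x -> I01 y -> 0 <= w ->
  (forall eta, 0 < eta -> exists N, / INR (S N) * (step_error + 1) <= eta /\
     Rabs (grid_at N (j, x) - g (j, x)) < eta /\ Rabs (grid_at N (j, y) - g (j, y)) < eta /\
     forall i, (i < S N)%nat -> Rabs (INR i / INR (S N) - x) <= Rabs (y - x) + / INR (S N) ->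
       Rabs (grid N (S j) i - c) <= w + eta) ->
  Rabs (g (j, y) - g (j, x) - (y - x) * c) <= Rabs (y - x) * w.
Proof.
  intros Hj Hx Hy Hw H.
  apply (increment_bound (fun N => grid N j) (fun N => grid N (S j)) (fun N => / INR (S N) * step_error)
           (fun t => g (j, t))); auto.
  { intros N i Hi. apply grid_step; auto. }
  intros eta He. destruct (H eta He) as [N [Hh [Ax [Ay Hb]]]].
  pose proof (inv_INR_bounds (S N) ltac:(lia)) as [Hh0 _]. pose proof step_error_nonneg.
  exists N. unfold grid_at in Ax, Ay; simpl in Ax, Ay.
  repeat split; auto; try lra; nra.
Qed.

Lemma limit_lipschitz j s t : (j <= 2)%nat -> I01 s -> I01 t ->
  Rabs (g (j, t) - g (j, s)) <= grid_bound (S j) * Rabs (t - s).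
Proof.
  intros Hj Hs Ht. rewrite Rmult_comm.
  replace (g (j, t) - g (j, s)) with (g (j, t) - g (j, s) - (t - s) * 0) by ring.
  apply limit_increment; auto; [apply grid_bound_nonneg |].
  intros eta He. pose proof step_error_nonneg.
  destruct (cluster_index [(j, s); (j, t)] eta (eta / (step_error + 1)) He) as [N [Hh Hl]];
    [apply Rdiv_lt_0_compat; lra |].
  exists N. repeat split.
  - apply (Rmult_le_reg_r (/ (step_error + 1))); [apply Rinv_0_lt_compat; lra |].
    rewrite Rmult_assoc, Rinv_r, Rmult_1_r by lra. exact Hh.
  - apply Hl; simpl; auto.
  - apply Hl; simpl; auto.
  - intros i Hi _. rewrite Rminus_0_r. pose proof (grid_bounded N (S j) i ltac:(lia)). lra.
Qed.

Lemma limit_derive j x : (j <= 1)%nat -> 0 < x < 1 -> is_derive (fun t => g (j, t)) x (g (S j, x)).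
Proof.
  intros Hj Hx. assert (Hx' : I01 x) by (unfold I01; lra).
  set (L := grid_lip (S j)). pose proof step_error_nonneg.
  assert (HL : 0 <= L) by (unfold L, grid_lip; pose proof (grid_bound_nonneg (S (S j))); lra).
  apply is_derive_of_increment; auto. intros eps He.
  exists (eps / (L + 1)). split; [apply Rdiv_lt_0_compat; lra |]. intros y Hy Hyx.
  pose proof (Rabs_pos (y - x)).
  assert (HyxL : Rabs (y - x) * (L + 1) <= eps) by (apply Rmult_le_of_le_div; lra).
  apply (Rle_trans _ (Rabs (y - x) * (L * Rabs (y - x)))).
  2: { rewrite (Rmult_comm eps). apply Rmult_le_compat_l; nra. }
  apply limit_increment; [lia | auto | auto | nra |]. intros eta Heta.
  set (rho := Rmin (eta / (step_error + 1)) (eta / (4 * (L + 1)))).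
  assert (Hrho : 0 < rho) by (apply Rmin_glb_lt; apply Rdiv_lt_0_compat; lra).
  destruct (cluster_index [(j, x); (j, y); (S j, x)] (eta / 2) rho) as [N [Hh Hl]]; [lra | auto |].
  pose proof (inv_INR_bounds (S N) ltac:(lia)) as [Hh0 _].
  assert (H1 : / INR (S N) * (step_error + 1) <= eta)
    by (apply Rmult_le_of_le_div; [lra | eapply Rle_trans; [apply Hh | apply Rmin_l]]).
  assert (H2 : / INR (S N) * (4 * (L + 1)) <= eta)
    by (apply Rmult_le_of_le_div; [lra | eapply Rle_trans; [apply Hh | apply Rmin_r]]).
  exists N. split; [auto | split; [| split]].
  - eapply Rlt_trans; [apply Hl; simpl; auto | lra].
  - eapply Rlt_trans; [apply Hl; simpl; auto | lra].
  - intros i Hi Hix.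
    pose proof (grid_near_limit N (S j) x (Rabs (y - x)) (eta / 2) ltac:(lia) Hx'
      ltac:(apply Hl; simpl; auto) i Hi Hix). fold L in H3. nra.
Qed.

Lemma limit_derive_top x : 0 < x < 1 ->
  is_derive (fun t => g (2%nat, t)) x (F x (g (0%nat, x)) (g (1%nat, x)) (g (2%nat, x))).
Proof.
  intros Hx. assert (Hx' : I01 x) by (unfold I01; lra). pose proof step_error_nonneg.
  set (L := grid_lip_max + 1).
  assert (HLk : forall k, (k <= 2)%nat -> 0 <= grid_lip k <= L - 1)
    by (intros k Hk; unfold L; pose proof (grid_lip_bounds k Hk); lra).
  assert (HL : 1 <= L) by (pose proof (HLk 0%nat ltac:(lia)); lra).
  apply is_derive_of_increment; auto. intros eps He.
  destruct (F_cont x (g (0%nat, x)) (g (1%nat, x)) (g (2%nat, x)) eps He) as [dF [HdF HF]].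
  exists (dF / (2 * L)). split; [apply Rdiv_lt_0_compat; lra |]. intros y Hy Hyx.
  assert (HyxL : Rabs (y - x) * (2 * L) <= dF) by (apply Rmult_le_of_le_div; lra).
  rewrite (Rmult_comm eps). apply limit_increment; auto; [lra |]. intros eta Heta.
  set (rho := Rmin (eta / (step_error + 1)) (dF / (8 * L))).
  assert (Hrho : 0 < rho) by (apply Rmin_glb_lt; apply Rdiv_lt_0_compat; lra).
  destruct (cluster_index [(2%nat, x); (2%nat, y); (0%nat, x); (1%nat, x)] (Rmin eta (dF / 8)) rho) as [N [Hh Hl]];
    [apply Rmin_glb_lt; lra | auto |].
  pose proof (inv_INR_bounds (S N) ltac:(lia)) as [Hh0 _].
  assert (H1 : / INR (S N) * (step_error + 1) <= eta)
    by (apply Rmult_le_of_le_div; [lra | eapply Rle_trans; [apply Hh | apply Rmin_l]]).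
  assert (H2 : / INR (S N) * (8 * L) <= dF)
    by (apply Rmult_le_of_le_div; [lra | eapply Rle_trans; [apply Hh | apply Rmin_r]]).
  pose proof (Rmin_l eta (dF / 8)). pose proof (Rmin_r eta (dF / 8)).
  exists N. split; [auto | split; [| split]].
  - eapply Rlt_le_trans; [apply Hl; simpl; auto | auto].
  - eapply Rlt_le_trans; [apply Hl; simpl; auto | auto].
  - intros i Hi Hix.
    assert (near : forall k, (k <= 2)%nat -> Rabs (grid N k i - g (k, x)) < dF).
    { intros k Hk. destruct (HLk k Hk) as [Hk0 Hk1].
      pose proof (grid_near_limit N k x (Rabs (y - x)) (Rmin eta (dF / 8)) Hk Hx'
        ltac:(apply Hl; destruct k as [|[|[|k]]]; simpl; auto; lia) i Hi Hix).
      assert (grid_lip k * (Rabs (y - x) + 2 * / INR (S N)) <= L * (Rabs (y - x) + 2 * / INR (S N)))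
        by (apply Rmult_le_compat_r; [pose proof (Rabs_pos (y - x)) |]; lra).
      nra. }
    apply Rlt_le. eapply Rlt_le_trans; [apply (HF (INR i / INR (S N))) | lra].
    + apply Rabs_le_between in Hix. apply Rabs_def1; nra.
    + apply (near 0%nat); lia.
    + apply (near 1%nat); lia.
    + apply (near 2%nat); lia.
Qed.

Lemma limit_linear_condition t a b c :
  (forall N, Bform a b c (grid_at N (0%nat, t)) (grid_at N (1%nat, t)) (grid_at N (2%nat, t)) = 0) ->
  Bform a b c (g (0%nat, t)) (g (1%nat, t)) (g (2%nat, t)) = 0.
Proof.
  intros H. apply (eq_of_dist_le_eps _ _ (Rabs a + Rabs b + Rabs c)). intros eps He.
  destruct (cluster_index [(0%nat, t); (1%nat, t); (2%nat, t)] eps 1) as [N [_ Hl]]; try lra.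
  rewrite <- (H N). unfold Bform.
  replace (_ - _) with (a * (g (0%nat, t) - grid_at N (0%nat, t)) + b * (g (1%nat, t) - grid_at N (1%nat, t))
                        + c * (g (2%nat, t) - grid_at N (2%nat, t))) by ring.
  eapply Rle_trans; [apply Rabs_triang3 |]. rewrite !Rabs_mult.
  assert (forall k, (k <= 2)%nat -> Rabs (g (k, t) - grid_at N (k, t)) <= eps).
  { intros k Hk. rewrite Rabs_minus_sym. apply Rlt_le, Hl. destruct k as [|[|[|k]]]; simpl; auto; lia. }
  pose proof (H0 0%nat ltac:(lia)); pose proof (H0 1%nat ltac:(lia)); pose proof (H0 2%nat ltac:(lia)).
  pose proof (Rabs_pos a); pose proof (Rabs_pos b); pose proof (Rabs_pos c). nra.
Qed.

Lemma limit_initial_condition a b c : a * p + b * q + c * r = 0 ->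
  Bform a b c (g (0%nat, 0)) (g (1%nat, 0)) (g (2%nat, 0)) = 0.
Proof.
  intros H. apply limit_linear_condition. intros N. unfold grid_at; simpl.
  rewrite grid_index_0 by lia. unfold Bform, node_u, node_u1, node_u2; simpl.
  replace (a * (lam N * p) + b * (lam N * q) + c * (lam N * r)) with (lam N * (a * p + b * q + c * r)) by ring.
  rewrite H. ring.
Qed.

Lemma limit_end_condition : Bform a3 b3 c3 (g (0%nat, 1)) (g (1%nat, 1)) (g (2%nat, 1)) = 0.
Proof.
  apply limit_linear_condition. intros N. unfold grid_at; simpl.
  rewrite grid_index_1 by lia. apply lam_root.
Qed.

End ShootingLimit.

Theorem shooting_solution : exists u u1 u2 : R -> R,
  (forall a b c, a * p + b * q + c * r = 0 -> Bform a b c (u 0) (u1 0) (u2 0) = 0) /\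
  Bform a3 b3 c3 (u 1) (u1 1) (u2 1) = 0 /\
  cont_on01 u /\ cont_on01 u1 /\ cont_on01 u2 /\
  (forall x, 0 < x < 1 ->
     is_derive u x (u1 x) /\ is_derive u1 x (u2 x) /\ is_derive u2 x (F x (u x) (u1 x) (u2 x))).
Proof.
  destruct (functional_choice (fun N lam => Rabs lam <= shooting_radius /\ shooting_residual (S N) lam = 0))
    as [lam Hlam]; [intros N; apply shooting_root; lia |].
  assert (radius : forall N, Rabs (lam N) <= shooting_radius) by apply Hlam.
  assert (root : forall N, shooting_residual (S N) (lam N) = 0) by apply Hlam.
  destruct (PointwiseCompactness.cluster_point_exists _ _ _ (grid_at_bounded lam radius)) as [g Hg].
  assert (cont : forall j, (j <= 2)%nat -> cont_on01 (fun t => g (j, t))).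
  { intros j Hj. apply (continuous_on_of_lipschitz _ _ (grid_bound (S j))). intros s t Hs Ht.
    apply (limit_lipschitz lam radius g Hg); auto. }
  exists (fun t => g (0%nat, t)), (fun t => g (1%nat, t)), (fun t => g (2%nat, t)).
  split; [| split; [| split; [| split; [| split]]]].
  - apply (limit_initial_condition lam g Hg).
  - apply (limit_end_condition lam root g Hg).
  - apply cont; lia.
  - apply cont; lia.
  - apply cont; lia.
  - intros x Hx. split; [| split].
    + apply (limit_derive lam radius g Hg 0); auto.
    + apply (limit_derive lam radius g Hg 1); auto.
    + apply (limit_derive_top lam radius g Hg); auto.
Qed.

End TaylorScheme.

(** * The Green function *)

Lemma section_continuous (H : R -> R -> R) t :
  (forall p, Sq01 p -> filterlim (fun q : R * R => H (fst q) (snd q)) (within Sq01 (locally p))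
                         (locally (H (fst p) (snd p)))) ->
  I01 t -> cont_on01 (H t).
Proof.
  intros Hc Ht x Hx. apply continuous_within_interval. intros eps He.
  destruct (joint_continuity_ed H Sq01 t x (Hc (t, x) (conj Ht Hx)) eps He) as [d [Hd Hd']].
  exists d. split; auto. intros y Hy Hyx. apply Hd'; auto; [split; auto |].
  rewrite Rminus_eq_0, Rabs_R0; auto.
Qed.

Section GreenFunction.

Variables (a1 b1 c1 a2 b2 c2 a3 b3 c3 : R) (G G1 G2 : R -> R -> R).
Hypothesis HG : is_green_function a1 b1 c1 a2 b2 c2 a3 b3 c3 G G1 G2.

Lemma G_section_continuous t : I01 t -> cont_on01 (G t).
Proof. apply section_continuous, HG. Qed.

Lemma G1_section_continuous t : I01 t -> cont_on01 (G1 t).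
Proof. apply section_continuous, HG. Qed.

Lemma G2_near t x : I01 t -> I01 x -> t <> x -> forall eps, 0 < eps -> exists del, 0 < del /\
  forall t' s, I01 t' -> I01 s -> t' <> s -> Rabs (t' - t) < del -> Rabs (s - x) < del ->
  Rabs (G2 t' s - G2 t x) < eps.
Proof.
  intros Ht Hx Htx eps He. destruct HG as [_ [_ [HGc _]]].
  destruct (joint_continuity_ed G2 (fun q => Sq01 q /\ fst q <> snd q) t x (HGc (t, x) (conj Ht Hx) Htx) eps He)
    as [d [Hd H]].
  exists d. split; auto. intros t' s Ht' Hs Hts H1 H2. apply H; auto. split; [split |]; auto.
Qed.

Lemma G2_section_continuous_at t x : I01 t -> I01 x -> t <> x -> continuous_within I01 (G2 t) x.
Proof.
  intros Ht Hx Htx. apply continuous_within_interval. intros eps He.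
  destruct (G2_near t x Ht Hx Htx eps He) as [d [Hd H]].
  assert (Hd' : 0 < Rmin d (Rabs (t - x))) by (apply Rmin_glb_lt; auto; apply Rabs_pos_lt; lra).
  exists (Rmin d (Rabs (t - x))). split; auto. intros y Hy Hyx.
  pose proof (Rmin_l d (Rabs (t - x))). pose proof (Rmin_r d (Rabs (t - x))).
  apply H; auto; [| rewrite Rminus_eq_0, Rabs_R0 |]; try lra.
  intros <-. lra.
Qed.

Lemma G2_integral_derive phi : cont_on01 phi -> forall t, 0 < t < 1 ->
  is_derive (fun t => RInt (fun s => G2 t s * phi s) 0 1) t (phi t).
Proof.
  intros Hp t Ht. destruct HG as [_ [_ [_ [_ [_ Hex]]]]].
  destruct (Hex phi Hp) as [[_ [_ [_ [Hd _]]]] _]. apply (Hd t Ht).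
Qed.

Lemma G2_tent_integral ti s0 d eps : I01 ti -> I01 s0 -> 0 < d -> 2 * d <= Rabs (ti - s0) ->
  (forall s, I01 s -> ti <> s -> Rabs (s - s0) < d -> Rabs (G2 ti s - G2 ti s0) < eps) ->
  Rabs (RInt (fun s => G2 ti s * tent s0 d s) 0 1 - G2 ti s0 * RInt (tent s0 d) 0 1)
    <= eps * RInt (tent s0 d) 0 1.
Proof.
  intros Hti Hs0 Hd Hfar Hnear.
  assert (Hzero : forall y, Rabs (y - ti) < d -> tent s0 d y = 0).
  { intros y Hy. apply tent_zero.
    pose proof (Rabs_triang (y - s0) (ti - y)). replace (y - s0 + (ti - y)) with (ti - s0) in H by ring.
    rewrite Rabs_minus_sym in Hy. lra. }
  apply RInt_near_const; [lra | | apply tent_continuous |].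
  - intros x Hx. destruct (Req_dec x ti) as [->|Hne].
    + apply (continuous_within_ext_near _ (fun _ => 0) (fun s => G2 ti s * tent s0 d s));
        [auto | | apply continuous_within_const].
      exists (mkposreal d Hd). intros y Hy _. simpl. rewrite (Hzero y Hy). ring.
    + apply (continuous_within_mult _ (G2 ti) (tent s0 d)).
      * apply G2_section_continuous_at; auto.
      * apply tent_continuous; auto.
  - intros s Hs. destruct (Rle_lt_dec (tent s0 d s) 0) as [Hle|Hlt].
    + replace (tent s0 d s) with 0 by (pose proof (tent_nonneg s0 d s); lra).
      rewrite !Rmult_0_r, Rminus_0_r, Rabs_R0. lra.
    + replace (G2 ti s * tent s0 d s - G2 ti s0 * tent s0 d s) with ((G2 ti s - G2 ti s0) * tent s0 d s) by ring.
      rewrite Rabs_mult, (Rabs_pos_eq (tent s0 d s)) by lra.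
      apply Rmult_le_compat_r; [lra |]. left. apply Hnear; auto; [| apply tent_support; auto].
      intros <-. rewrite Hzero in Hlt; [lra |]. rewrite Rminus_eq_0, Rabs_R0. auto.
Qed.

Lemma G2_integral_const phi t1 t2 : 0 < t1 -> t1 < t2 -> t2 < 1 -> cont_on01 phi ->
  (forall t, t1 <= t <= t2 -> phi t = 0) ->
  RInt (fun s => G2 t1 s * phi s) 0 1 = RInt (fun s => G2 t2 s * phi s) 0 1.
Proof.
  intros H1 H12 H2 Hp Hz. set (w := fun t => RInt (fun s => G2 t s * phi s) 0 1).
  assert (Hd : forall t, t1 <= t <= t2 -> is_derive w t (phi t))
    by (intros t Ht; apply G2_integral_derive; auto; lra).
  destruct (MVT_gen w t1 t2 phi) as [c [Hc Hc2]].
  - intros x Hx. rewrite Rmin_left, Rmax_right in Hx by lra. apply Hd. lra.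
  - intros x Hx. rewrite Rmin_left, Rmax_right in Hx by lra. apply continuity_pt_filterlim.
    apply (ex_derive_continuous (K := R_AbsRing) (V := R_NormedModule)). eexists. apply Hd. lra.
  - change (w t1 = w t2). rewrite Rmin_left, Rmax_right in Hc by lra. rewrite Hz in Hc2 by lra. lra.
Qed.

(* For a tent [phi] around [s0] vanishing on [[t1, t2]], [int G2(t, s) phi(s) ds] takes the same
   value at [t1] and [t2]; letting the tent shrink gives [G2 t1 s0 = G2 t2 s0]. *)
Lemma G2_const_in_t t1 t2 s0 : 0 < t1 -> t1 < t2 -> t2 < 1 -> I01 s0 -> (s0 < t1 \/ t2 < s0) ->
  G2 t1 s0 = G2 t2 s0.
Proof.
  intros H1 H12 H2 Hs0 Hout.
  set (dd := Rmax (t1 - s0) (s0 - t2)).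
  assert (Hfar : forall y, t1 - dd / 2 <= y <= t2 + dd / 2 -> dd / 2 <= Rabs (y - s0)).
  { intros y Hy. unfold dd in *. destruct Hout.
    - rewrite Rmax_left in * by lra. rewrite Rabs_pos_eq; lra.
    - rewrite Rmax_right in * by lra. rewrite Rabs_left; lra. }
  assert (Hdd : 0 < dd).
  { unfold dd. destruct Hout; [apply (Rlt_le_trans _ (t1 - s0)); [lra | apply Rmax_l] |
                               apply (Rlt_le_trans _ (s0 - t2)); [lra | apply Rmax_r]]. }
  apply (eq_of_dist_le_eps _ _ 2). intros eps He.
  destruct (G2_near t1 s0 ltac:(unfold I01; lra) Hs0 ltac:(lra) eps ltac:(lra)) as [d1 [Hd1 HD1]].
  destruct (G2_near t2 s0 ltac:(unfold I01; lra) Hs0 ltac:(lra) eps ltac:(lra)) as [d2 [Hd2 HD2]].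
  set (d := Rmin (Rmin d1 d2) (Rmin (dd / 4) (1 / 2))).
  assert (Hd : 0 < d) by (repeat apply Rmin_glb_lt; lra).
  assert (Hm1 : d <= d1) by (eapply Rle_trans; [apply Rmin_l | apply Rmin_l]).
  assert (Hm2 : d <= d2) by (eapply Rle_trans; [apply Rmin_l | apply Rmin_r]).
  assert (Hm3 : d <= dd / 4) by (eapply Rle_trans; [apply Rmin_r | apply Rmin_l]).
  assert (Hm4 : d <= 1 / 2) by (eapply Rle_trans; [apply Rmin_r | apply Rmin_r]).
  set (w := fun t => RInt (fun s => G2 t s * tent s0 d s) 0 1).
  assert (Hw : w t1 = w t2).
  { apply G2_integral_const; auto; [apply tent_continuous |]. intros t Ht.
    apply tent_zero. pose proof (Hfar t ltac:(lra)). lra. }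
  set (I := RInt (tent s0 d) 0 1).
  assert (HI : 0 < I) by (unfold I; pose proof (tent_integral_lower s0 d Hs0 ltac:(lra)); nra).
  assert (Happrox : forall ti di, t1 <= ti <= t2 -> d <= di ->
    (forall t s, I01 t -> I01 s -> t <> s -> Rabs (t - ti) < di -> Rabs (s - s0) < di ->
       Rabs (G2 t s - G2 ti s0) < eps) ->
    Rabs (w ti - G2 ti s0 * I) <= eps * I).
  { intros ti di Hti Hdi HD. apply G2_tent_integral; [unfold I01; lra | auto | auto | |].
    - pose proof (Hfar ti ltac:(lra)). lra.
    - intros s Hs Hts Hss. apply HD; auto; [unfold I01 | rewrite Rminus_eq_0, Rabs_R0 |]; lra. }
  pose proof (Happrox t1 d1 ltac:(lra) Hm1 HD1) as A1. pose proof (Happrox t2 d2 ltac:(lra) Hm2 HD2) as A2.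
  rewrite Hw in A1.
  assert (Rabs ((G2 t1 s0 - G2 t2 s0) * I) <= 2 * eps * I).
  { replace ((G2 t1 s0 - G2 t2 s0) * I) with (- (w t2 - G2 t1 s0 * I) + (w t2 - G2 t2 s0 * I)) by ring.
    eapply Rle_trans; [apply Rabs_triang |]. rewrite Rabs_Ropp. lra. }
  rewrite Rabs_mult, (Rabs_pos_eq I) in H by lra.
  apply (Rmult_le_reg_r I); auto. lra.
Qed.

Lemma G2_eq_at_0 t s : 0 <= t < s -> s <= 1 -> G2 t s = G2 0 s.
Proof.
  intros Ht Hs. destruct (Req_dec t 0) as [->|Ht0]; auto.
  apply (eq_of_dist_le_eps _ _ 1). intros eps He.
  destruct (G2_near 0 s ltac:(unfold I01; lra) ltac:(unfold I01; lra) ltac:(lra) eps ltac:(lra)) as [d [Hd H]].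
  pose proof (Rmin_l (t / 2) (d / 2)). pose proof (Rmin_r (t / 2) (d / 2)).
  set (t' := Rmin (t / 2) (d / 2)) in *.
  assert (0 < t') by (apply Rmin_glb_lt; lra).
  rewrite <- (G2_const_in_t t' t s) by (unfold I01; lra).
  rewrite Rmult_1_r. left. apply H; unfold I01; try lra.
  - rewrite Rminus_0_r, Rabs_pos_eq; lra.
  - rewrite Rminus_eq_0, Rabs_R0. lra.
Qed.

Lemma G2_eq_at_1 t s : 0 <= s < t -> t <= 1 -> G2 t s = G2 1 s.
Proof.
  intros Hs Ht. destruct (Req_dec t 1) as [->|Ht1]; auto.
  apply (eq_of_dist_le_eps _ _ 1). intros eps He.
  destruct (G2_near 1 s ltac:(unfold I01; lra) ltac:(unfold I01; lra) ltac:(lra) eps ltac:(lra)) as [d [Hd H]].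
  pose proof (Rmax_l ((t + 1) / 2) (1 - d / 2)). pose proof (Rmax_r ((t + 1) / 2) (1 - d / 2)).
  set (t' := Rmax ((t + 1) / 2) (1 - d / 2)) in *.
  assert (t' < 1) by (apply Rmax_lub_lt; lra).
  rewrite (G2_const_in_t t t' s) by (unfold I01; lra).
  rewrite Rmult_1_r. left. apply H; unfold I01; try lra.
  - rewrite Rabs_left; lra.
  - rewrite Rminus_eq_0, Rabs_R0. lra.
Qed.

Lemma G2_continuous_at t s : I01 t -> 0 < s < 1 -> t <> s -> continuous (G2 t) s.
Proof.
  intros Ht Hs Hts. apply (continuous_of_continuous_within I01).
  - eapply filter_imp; [| apply (locally_interior 0 1 s Hs)]. intros y Hy. unfold I01. lra.
  - apply G2_section_continuous_at; [exact Ht | unfold I01; lra | exact Hts].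
Qed.

Lemma ex_RInt_G2_at_1 t : 0 <= t < 1 -> ex_RInt (G2 1) 0 t.
Proof.
  intros Ht. apply ex_RInt_of_continuous_on; [lra |]. intros x Hx.
  apply (continuous_within_subset I01); [unfold I01; intros; lra |].
  apply G2_section_continuous_at; unfold I01; lra.
Qed.

Lemma ex_RInt_G2_at_0 t : 0 < t <= 1 -> ex_RInt (G2 0) t 1.
Proof.
  intros Ht. apply ex_RInt_of_continuous_on; [lra |]. intros x Hx.
  apply (continuous_within_subset I01); [unfold I01; intros; lra |].
  apply G2_section_continuous_at; unfold I01; lra.
Qed.

(* With [phi = 1], [int G2(t, s) ds = int_0^t G2(1, s) ds + int_t^1 G2(0, s) ds] has derivative [1]. *)
Lemma G2_jump s : 0 < s < 1 -> G2 1 s - G2 0 s = 1.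
Proof.
  intros Hs. pose proof (locally_interior 0 1 s Hs) as Hloc.
  assert (Hsplit : forall t, 0 < t < 1 ->
    RInt (fun s => G2 t s * 1) 0 1 = plus (RInt (G2 1) 0 t) (RInt (G2 0) t 1)).
  { intros t Ht. rewrite <- (RInt_Chasles (V := R_CompleteNormedModule) _ 0 t 1).
    - f_equal; apply RInt_ext; intros x Hx; rewrite Rmin_left, Rmax_right in Hx by lra; rewrite Rmult_1_r.
      + apply G2_eq_at_1; lra.
      + apply G2_eq_at_0; lra.
    - apply (ex_RInt_ext (G2 1)); [| apply ex_RInt_G2_at_1; lra]. intros x Hx.
      rewrite Rmin_left, Rmax_right in Hx by lra. rewrite Rmult_1_r. symmetry; apply G2_eq_at_1; lra.
    - apply (ex_RInt_ext (G2 0)); [| apply ex_RInt_G2_at_0; lra]. intros x Hx.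
      rewrite Rmin_left, Rmax_right in Hx by lra. rewrite Rmult_1_r. symmetry; apply G2_eq_at_0; lra. }
  assert (D1 : is_derive (fun t => RInt (G2 1) 0 t) s (G2 1 s)).
  { apply (is_derive_RInt (G2 1) (fun t => RInt (G2 1) 0 t) 0 s); [| apply G2_continuous_at; unfold I01; lra].
    eapply filter_imp; [| exact Hloc]. intros y Hy.
    apply (RInt_correct (V := R_CompleteNormedModule)), ex_RInt_G2_at_1. lra. }
  assert (D2 : is_derive (fun t => RInt (G2 0) t 1) s (opp (G2 0 s))).
  { apply (is_derive_RInt' (G2 0) (fun t => RInt (G2 0) t 1) s 1); [| apply G2_continuous_at; unfold I01; lra].
    eapply filter_imp; [| exact Hloc]. intros y Hy.
    apply (RInt_correct (V := R_CompleteNormedModule)), ex_RInt_G2_at_0. lra. }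
  assert (Dw : is_derive (fun t => RInt (fun s => G2 t s * 1) 0 1) s (plus (G2 1 s) (opp (G2 0 s)))).
  { apply (is_derive_ext_loc (fun t => plus (RInt (G2 1) 0 t) (RInt (G2 0) t 1))).
    - eapply filter_imp; [| exact Hloc]. intros y Hy. symmetry. apply Hsplit, Hy.
    - exact (is_derive_plus _ _ s _ _ D1 D2). }
  pose proof (G2_integral_derive (fun _ => 1) ltac:(intros x Hx; apply continuous_within_const) s Hs) as Dw'.
  assert (E : plus (G2 1 s) (opp (G2 0 s)) = 1)
    by (rewrite <- (is_derive_unique _ _ _ Dw); exact (is_derive_unique _ _ _ Dw')).
  change (plus ?x ?y) with (x + y) in E. change (opp ?x) with (- x) in E. lra.
Qed.

(* The value of [G2 t s] for [s < t], made continuous on [[0, 1]] by switching branches via [G2_jump]. *)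
Definition G2_lower (s : R) : R := if Rle_dec s (1 / 2) then G2 1 s else G2 0 s + 1.

Lemma G2_lower_continuous : cont_on01 G2_lower.
Proof.
  intros x Hx. destruct (Rlt_dec x 1) as [Hx1|Hx1].
  - apply (continuous_within_ext_near _ (G2 1) G2_lower); auto.
    + exists (mkposreal (1 - x) ltac:(lra)). intros y Hy Hy01. change (Rabs (y - x) < 1 - x) in Hy.
      apply Rabs_def2 in Hy. unfold G2_lower. destruct Rle_dec; auto.
      pose proof (G2_jump y ltac:(unfold I01 in Hy01; lra)). lra.
    + apply G2_section_continuous_at; unfold I01 in *; lra.
  - assert (x = 1) as -> by (unfold I01 in Hx; lra).
    apply (continuous_within_ext_near _ (fun y => G2 0 y + 1) G2_lower); auto.
    + exists (mkposreal (1 / 2) ltac:(lra)). intros y Hy Hy01. change (Rabs (y - 1) < 1 / 2) in Hy.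
      apply Rabs_def2 in Hy. unfold G2_lower. destruct Rle_dec; [lra | auto].
    + apply (continuous_within_plus _ (G2 0) (fun _ => 1)); [| apply continuous_within_const].
      apply G2_section_continuous_at; unfold I01; lra.
Qed.

Lemma G2_eq_lower t s : 0 <= s < t -> t <= 1 -> G2 t s = G2_lower s.
Proof.
  intros Hs Ht. rewrite (G2_eq_at_1 t s) by lra. unfold G2_lower. destruct Rle_dec; auto.
  pose proof (G2_jump s ltac:(lra)). lra.
Qed.

Lemma G2_eq_upper t s : 0 <= t < s -> s <= 1 -> G2 t s = G2_lower s - 1.
Proof.
  intros Ht Hs. rewrite (G2_eq_at_0 t s) by lra. unfold G2_lower. destruct Rle_dec; [| ring].
  pose proof (G2_jump s ltac:(lra)). lra.
Qed.

Lemma ex_RInt_G2_mult t psi : I01 t -> cont_on01 psi ->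
  ex_RInt (fun s => G2 t s * psi s) 0 1 /\ ex_RInt (fun s => Rabs (G2 t s * psi s)) 0 1.
Proof.
  intros Ht Hp.
  assert (Hlow : cont_on01 (fun s => G2_lower s * psi s)).
  { intros x Hx. apply (continuous_within_mult _ G2_lower psi); [apply G2_lower_continuous | apply Hp]; auto. }
  assert (Hup : cont_on01 (fun s => (G2_lower s - 1) * psi s)).
  { intros x Hx. apply (continuous_within_mult _ (fun s => G2_lower s + - 1) psi); [| apply Hp; auto].
    apply (continuous_within_plus _ G2_lower (fun _ => - 1)); [apply G2_lower_continuous; auto |].
    apply continuous_within_const. }
  assert (Habs : forall k, cont_on01 k -> cont_on01 (fun s => Rabs (k s))).
  { intros k Hk x Hx. apply (continuous_within_abs _ k), Hk, Hx. }
  assert (Hsub : forall k c d, 0 <= c -> d <= 1 -> cont_on01 k -> continuous_on (fun s => c <= s <= d) k).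
  { intros k c d Hc Hd Hk. apply (continuous_on_subset I01); auto. unfold I01; intros; lra. }
  unfold I01 in Ht. split.
  - apply (ex_RInt_piecewise _ (fun s => G2_lower s * psi s) (fun s => (G2_lower s - 1) * psi s) t);
      [auto | apply Hsub; auto; lra | apply Hsub; auto; lra | |].
    + intros s Hs. cbv beta. rewrite (G2_eq_lower t s) by lra. auto.
    + intros s Hs. cbv beta. rewrite (G2_eq_upper t s) by lra. auto.
  - apply (ex_RInt_piecewise _ (fun s => Rabs (G2_lower s * psi s)) (fun s => Rabs ((G2_lower s - 1) * psi s)) t);
      [auto | apply Hsub; [lra | lra | apply Habs, Hlow] | apply Hsub; [lra | lra | apply Habs, Hup] | |].
    + intros s Hs. cbv beta. rewrite (G2_eq_lower t s) by lra. auto.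
    + intros s Hs. cbv beta. rewrite (G2_eq_upper t s) by lra. auto.
Qed.

Lemma ex_RInt_abs_G2 t : I01 t -> ex_RInt (fun s => Rabs (G2 t s)) 0 1.
Proof.
  intros Ht. destruct (ex_RInt_G2_mult t (fun _ => 1) Ht) as [_ H]; [intros x Hx; apply continuous_within_const |].
  apply (ex_RInt_ext (fun s => Rabs (G2 t s * 1))); auto. intros; rewrite Rmult_1_r; auto.
Qed.

Lemma green_representation phi u u1 u2 : cont_on01 phi ->
  is_bvp_solution a1 b1 c1 a2 b2 c2 a3 b3 c3 (fun t _ _ _ => phi t) u u1 u2 ->
  forall t, I01 t ->
    u t = RInt (fun s => G t s * phi s) 0 1 /\ u1 t = RInt (fun s => G1 t s * phi s) 0 1 /\
    u2 t = RInt (fun s => G2 t s * phi s) 0 1.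
Proof.
  intros Hp Hsol. destruct HG as [_ [_ [_ [_ [_ Hex]]]]]. destruct (Hex phi Hp) as [HW Huniq].
  assert (E0 := Huniq u u1 u2 Hsol).
  destruct Hsol as [Cu [Cu1 [Cu2 [Du _]]]]. destruct HW as [CW0 [CW1 [CW2 [DW _]]]].
  assert (E1 := derivative_unique_on01 _ _ _ _ E0 Cu1 CW1 (fun t Ht => proj1 (Du t Ht)) (fun t Ht => proj1 (DW t Ht))).
  assert (E2 := derivative_unique_on01 _ _ _ _ E1 Cu2 CW2 (fun t Ht => proj1 (proj2 (Du t Ht)))
    (fun t Ht => proj1 (proj2 (DW t Ht)))).
  intros t Ht. auto.
Qed.

Lemma green_kernel_bound (K : R -> R -> R) phi m mK t :
  ex_RInt (fun s => K t s * phi s) 0 1 -> ex_RInt (fun s => Rabs (K t s * phi s)) 0 1 ->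
  ex_RInt (fun s => Rabs (K t s)) 0 1 -> 0 <= m -> (forall s, I01 s -> Rabs (phi s) <= m) ->
  RInt (fun s => Rabs (K t s)) 0 1 <= mK ->
  Rabs (RInt (fun s => K t s * phi s) 0 1) <= mK * m.
Proof.
  intros E1 E2 E3 Hm Hb HK. eapply Rle_trans; [apply RInt_abs_bound; auto; lra |].
  rewrite (Rmult_comm mK). apply Rmult_le_compat_l; auto.
Qed.

Lemma green_bounds M0 M1 M2 m phi u u1 u2 :
  is_max01 (fun t => RInt (fun s => Rabs (G t s)) 0 1) M0 ->
  is_max01 (fun t => RInt (fun s => Rabs (G1 t s)) 0 1) M1 ->
  is_max01 (fun t => RInt (fun s => Rabs (G2 t s)) 0 1) M2 ->
  cont_on01 phi -> (forall s, I01 s -> Rabs (phi s) <= m) ->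
  is_bvp_solution a1 b1 c1 a2 b2 c2 a3 b3 c3 (fun t _ _ _ => phi t) u u1 u2 ->
  forall t, I01 t -> Rabs (u t) <= M0 * m /\ Rabs (u1 t) <= M1 * m /\ Rabs (u2 t) <= M2 * m.
Proof.
  intros [HM0 _] [HM1 _] [HM2 _] Hp Hb Hsol t Ht.
  assert (Hm : 0 <= m) by (eapply Rle_trans; [apply Rabs_pos | apply (Hb 0); unfold I01; lra]).
  assert (Hcont : forall k, cont_on01 k -> cont_on01 (fun s => k s * phi s)).
  { intros k Hk x Hx. apply (continuous_within_mult _ k phi); [apply Hk | apply Hp]; auto. }
  assert (Habs : forall k, cont_on01 k -> cont_on01 (fun s => Rabs (k s))).
  { intros k Hk x Hx. apply (continuous_within_abs _ k), Hk, Hx. }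
  assert (Hex : forall k, cont_on01 k -> ex_RInt k 0 1) by (intros; apply ex_RInt_of_continuous_on; auto; lra).
  destruct (green_representation phi u u1 u2 Hp Hsol t Ht) as [-> [-> ->]].
  destruct (ex_RInt_G2_mult t phi Ht Hp) as [E1 E2].
  pose proof (G_section_continuous t Ht). pose proof (G1_section_continuous t Ht).
  split; [| split].
  - apply green_kernel_bound; auto.
  - apply green_kernel_bound; auto.
  - apply green_kernel_bound; auto. apply ex_RInt_abs_G2, Ht.
Qed.

Lemma green_max_nonneg M0 M1 M2 :
  is_max01 (fun t => RInt (fun s => Rabs (G t s)) 0 1) M0 ->
  is_max01 (fun t => RInt (fun s => Rabs (G1 t s)) 0 1) M1 ->
  is_max01 (fun t => RInt (fun s => Rabs (G2 t s)) 0 1) M2 ->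
  0 <= M0 /\ 0 <= M1 /\ 0 <= M2.
Proof.
  intros H0 H1 H2.
  assert (Habs : forall k, cont_on01 k -> ex_RInt (fun s => Rabs (k s)) 0 1).
  { intros k Hk. apply ex_RInt_of_continuous_on; [lra |]. intros x Hx. apply (continuous_within_abs _ k), Hk, Hx. }
  split; [| split]; eapply is_max01_integral_nonneg; eauto; intros t Ht.
  - apply Habs, G_section_continuous, Ht.
  - apply Habs, G1_section_continuous, Ht.
  - apply ex_RInt_abs_G2, Ht.
Qed.

(* [p + q t + r t^2 / 2] solves the homogeneous problem, which by uniqueness has only the zero solution. *)
Lemma green_homogeneous_quadratic p q r :
  Bform a1 b1 c1 p q r = 0 -> Bform a2 b2 c2 p q r = 0 -> Bform a3 b3 c3 (p + q + r / 2) (q + r) r = 0 ->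
  p = 0 /\ q = 0 /\ r = 0.
Proof.
  intros B1 B2 B3. destruct HG as [_ [_ [_ [_ [_ Hex]]]]].
  destruct (Hex (fun _ => 0) ltac:(intros x Hx; apply continuous_within_const)) as [_ Huniq].
  set (P := fun t => p + q * t + r * (t * t / 2)).
  assert (Hsmooth : forall f : R -> R, (forall t, ex_derive f t) -> cont_on01 f).
  { intros f Hf. apply continuous_on_forall. intros x _.
    apply (ex_derive_continuous (K := R_AbsRing) (V := R_NormedModule)), Hf. }
  assert (Hsol : is_bvp_solution a1 b1 c1 a2 b2 c2 a3 b3 c3 (fun t _ _ _ => 0) P (fun t => q + r * t) (fun _ => r)).
  { split; [| split; [| split; [| split; [| split]]]].
    - apply Hsmooth. intros t. unfold P. auto_derive. auto.
    - apply Hsmooth. intros t. auto_derive. auto.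
    - apply Hsmooth. intros t. auto_derive. auto.
    - intros t Ht. split; [| split].
      + unfold P. auto_derive; auto. field.
      + auto_derive; auto. ring.
      + auto_derive; auto.
    - unfold P, Bform in *. lra.
    - split; unfold P, Bform in *; lra. }
  assert (HP : forall t, I01 t -> P t = 0).
  { intros t Ht. rewrite (Huniq _ _ _ Hsol t Ht), (RInt_ext _ (fun _ => 0)), RInt_const.
    - change (scal (1 - 0) 0) with ((1 - 0) * 0). ring.
    - intros x _. apply Rmult_0_r. }
  pose proof (HP 0 ltac:(unfold I01; lra)) as P0. pose proof (HP 1 ltac:(unfold I01; lra)) as P1.
  pose proof (HP (1 / 2) ltac:(unfold I01; lra)) as P2. unfold P in P0, P1, P2. lra.
Qed.

End GreenFunction.

(** * The nonlinear problem *)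

Lemma rank3_cross_nonzero a1 b1 c1 a2 b2 c2 a3 b3 c3 : rank3_bc a1 b1 c1 a2 b2 c2 a3 b3 c3 ->
  ~ (b1 * c2 - c1 * b2 = 0 /\ c1 * a2 - a1 * c2 = 0 /\ a1 * b2 - b1 * a2 = 0).
Proof.
  intros Hrank [Hp [Hq Hr]].
  destruct (Req_dec a1 0) as [Ha|Ha]; [destruct (Req_dec b1 0) as [Hb|Hb];
    [destruct (Req_dec c1 0) as [Hc|Hc] |] |].
  - subst. destruct (Hrank 1 0 0) as [H _]; lra.
  - subst. destruct (Hrank c2 (- c1) 0) as [_ [H _]]; lra.
  - subst. destruct (Hrank b2 (- b1) 0) as [_ [H _]]; lra.
  - destruct (Hrank a2 (- a1) 0) as [_ [H _]]; lra.
Qed.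

Lemma continuous4_compose F u u1 u2 : continuous4 F -> cont_on01 u -> cont_on01 u1 -> cont_on01 u2 ->
  cont_on01 (fun t => F t (u t) (u1 t) (u2 t)).
Proof.
  intros HF Cu Cu1 Cu2 x Hx.
  change (continuous_within (fun y => 0 <= y <= 1) (fun t => F t (u t) (u1 t) (u2 t)) x).
  apply continuous_within_interval. intros eps He.
  destruct (HF x (u x) (u1 x) (u2 x) eps He) as [dF [HdF H]].
  destruct (proj1 (continuous_within_interval 0 1 u x) (Cu x Hx) dF HdF) as [d1 [Hd1 H1]].
  destruct (proj1 (continuous_within_interval 0 1 u1 x) (Cu1 x Hx) dF HdF) as [d2 [Hd2 H2]].
  destruct (proj1 (continuous_within_interval 0 1 u2 x) (Cu2 x Hx) dF HdF) as [d3 [Hd3 H3]].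
  pose proof (Rmin_l (Rmin dF d1) (Rmin d2 d3)). pose proof (Rmin_r (Rmin dF d1) (Rmin d2 d3)).
  pose proof (Rmin_l dF d1). pose proof (Rmin_r dF d1). pose proof (Rmin_l d2 d3). pose proof (Rmin_r d2 d3).
  exists (Rmin (Rmin dF d1) (Rmin d2 d3)). split; [repeat apply Rmin_glb_lt; auto |].
  intros y Hy Hyx. apply H; [lra | apply H1 | apply H2 | apply H3]; auto; lra.
Qed.

Section Clamping.

Variables (f : R -> R -> R -> R -> R) (M0 M1 M2 M : R).
Hypotheses (M0_nonneg : 0 <= M0 * M) (M1_nonneg : 0 <= M1 * M) (M2_nonneg : 0 <= M2 * M).

Definition clamped (t x y z : R) : R :=
  f (clamp 0 1 t) (clamp (- (M0 * M)) (M0 * M) x) (clamp (- (M1 * M)) (M1 * M) y) (clamp (- (M2 * M)) (M2 * M) z).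

Lemma clamp_in_DM t x y z :
  DM M0 M1 M2 M (clamp 0 1 t, clamp (- (M0 * M)) (M0 * M) x, clamp (- (M1 * M)) (M1 * M) y,
                 clamp (- (M2 * M)) (M2 * M) z).
Proof.
  assert (Habs : forall A x, 0 <= A -> Rabs (clamp (- A) A x) <= A)
    by (intros A w HA; apply Rabs_le_between, clamp_in; lra).
  split; [apply clamp_in; lra | auto].
Qed.

Lemma clamped_continuous : cont_on4 f (DM M0 M1 M2 M) -> continuous4 clamped.
Proof.
  intros Hc t x y z eps He.
  specialize (Hc _ (clamp_in_DM t x y z)). apply filterlim_locally with (eps := mkposreal eps He) in Hc.
  destruct Hc as [[d Hd] Hc]. exists d. split; auto. intros t' x' y' z' H1 H2 H3 H4.
  apply (Hc (_, _, _, _)); [| apply clamp_in_DM].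
  repeat split; (eapply Rle_lt_trans; [apply clamp_lipschitz; lra | auto]).
Qed.

Lemma clamped_eq t x y z : I01 t -> Rabs x <= M0 * M -> Rabs y <= M1 * M -> Rabs z <= M2 * M ->
  clamped t x y z = f t x y z.
Proof.
  intros Ht Hx Hy Hz. apply Rabs_le_between in Hx, Hy, Hz.
  unfold clamped. rewrite !clamp_id; auto.
Qed.

End Clamping.

Theorem theorem1 (a1 b1 c1 a2 b2 c2 a3 b3 c3 : R) (G G1 G2 : R -> R -> R)
  (M0 M1 M2 : R) (f : R -> R -> R -> R -> R) (M : R) :
  rank3_bc a1 b1 c1 a2 b2 c2 a3 b3 c3 ->
  is_green_function a1 b1 c1 a2 b2 c2 a3 b3 c3 G G1 G2 ->
  is_max01 (fun t => RInt (fun s => Rabs (G t s)) 0 1) M0 ->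
  is_max01 (fun t => RInt (fun s => Rabs (G1 t s)) 0 1) M1 ->
  is_max01 (fun t => RInt (fun s => Rabs (G2 t s)) 0 1) M2 ->
  0 < M ->
  cont_on4 f (DM M0 M1 M2 M) ->
  (forall t x y z, DM M0 M1 M2 M (t, x, y, z) -> Rabs (f t x y z) <= M) ->
  exists u u1 u2 : R -> R,
    is_bvp_solution a1 b1 c1 a2 b2 c2 a3 b3 c3 f u u1 u2 /\
    (forall t, 0 <= t <= 1 ->
       Rabs (u t) <= M0 * M /\ Rabs (u1 t) <= M1 * M /\ Rabs (u2 t) <= M2 * M).
Proof.
  intros Hrank HG HM0 HM1 HM2 HM Hcont Hbound.
  destruct (green_max_nonneg _ _ _ _ _ _ _ _ _ _ _ _ HG _ _ _ HM0 HM1 HM2) as [H0 [H1 H2]].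
  assert (Hnn : 0 <= M0 * M /\ 0 <= M1 * M /\ 0 <= M2 * M) by (repeat split; nra).
  set (F := clamped f M0 M1 M2 M).
  assert (F_bound : forall t x y z, Rabs (F t x y z) <= M) by (intros; apply Hbound, clamp_in_DM; tauto).
  assert (F_cont : continuous4 F) by (apply clamped_continuous; tauto).
  set (p := b1 * c2 - c1 * b2). set (q := c1 * a2 - a1 * c2). set (r := a1 * b2 - b1 * a2).
  assert (Hslope : shooting_slope p q r a3 b3 c3 <> 0).
  { intros Hs. apply (rank3_cross_nonzero _ _ _ _ _ _ _ _ _ Hrank).
    apply (green_homogeneous_quadratic _ _ _ _ _ _ _ _ _ _ _ _ HG); auto; unfold Bform, p, q, r; ring. }
  destruct (shooting_solution F p q r M F_bound F_cont a3 b3 c3 Hslope)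
    as [u [u1 [u2 [Hinit [Hend [Cu [Cu1 [Cu2 Hder]]]]]]]].
  assert (Hsol : is_bvp_solution a1 b1 c1 a2 b2 c2 a3 b3 c3 (fun t _ _ _ => F t (u t) (u1 t) (u2 t)) u u1 u2).
  { split; [exact Cu | split; [exact Cu1 | split; [exact Cu2 | split; [exact Hder |]]]].
    split; [| split]; [apply Hinit; unfold p, q, r; ring | apply Hinit; unfold p, q, r; ring | exact Hend]. }
  assert (Hbd := green_bounds _ _ _ _ _ _ _ _ _ _ _ _ HG _ _ _ _ _ _ _ _ HM0 HM1 HM2
    (continuous4_compose F u u1 u2 F_cont Cu Cu1 Cu2) (fun s _ => F_bound _ _ _ _) Hsol).
  exists u, u1, u2. split; [| exact Hbd].
  destruct Hsol as [C1 [C2 [C3 [D B]]]].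
  split; [exact C1 | split; [exact C2 | split; [exact C3 | split; [| exact B]]]].
  intros t Ht. destruct (D t Ht) as [D1 [D2 D3]]. destruct (Hbd t ltac:(unfold I01; lra)) as [B0 [B1 B2]].
  split; [exact D1 | split; [exact D2 |]].
  rewrite <- (clamped_eq f M0 M1 M2 M t); auto. unfold I01; lra.
Qed.
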